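(* For every $n\ge1$, there is an equivalence relation on $\mathbb{N}$ which is universal for $\Sigma^0_n$ equivalence relations on $\mathbb{N}$ under computable reductions and which is $\Pi^0_{n-1}$-graphable with diameter $3$.
   Context: $E$ is universal for $\Sigma^0_n$ equivalence relations on $\mathbb{N}$ if $E$ is a $\Sigma^0_n$ equivalence relation on $\mathbb{N}$ and every $\Sigma^0_n$ equivalence relation $F$ on $\mathbb{N}$ admits a total computable $f:\mathbb{N}\to\mathbb{N}$ with $nFm\iff f(n)Ef(m)$. $\Pi^0_0$ means computable. $E$ is $\Gamma$-graphable with diameter $k$ if there is a simple undirected graph $G$ in $\Gamma$ whose connectedness relation equals $E$ and $k$ is the least integer such that any two $G$-connected points are joined by a path of length at most $k$. *)

From Stdlib Require Import List Arith.
Import ListNotations.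

Inductive PR : Type :=
| PZero : PR
| PSucc : PR
| PProj : nat -> PR
| PComp : PR -> list PR -> PR
| PRec  : PR -> PR -> PR          (* primitive recursion on the first argument *)
| PMu   : PR -> PR.               (* unbounded minimization on the first argument *)

Inductive eval : PR -> list nat -> nat -> Prop :=
| eZero v : eval PZero v 0
| eSucc x v : eval PSucc (x :: v) (S x)
| eProj i v : i < length v -> eval (PProj i) v (nth i v 0)
| eComp f gs v ws y : evalList gs v ws -> eval f ws y -> eval (PComp f gs) v y
| eRec0 f g v y : eval f v y -> eval (PRec f g) (0 :: v) y
| eRecS f g n v r y :
    eval (PRec f g) (n :: v) r -> eval g (n :: r :: v) y -> eval (PRec f g) (S n :: v) y
| eMu f v y :
    eval f (y :: v) 0 ->
    (forall z, z < y -> exists w, eval f (z :: v) (S w)) ->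
    eval (PMu f) v y
with evalList : list PR -> list nat -> list nat -> Prop :=
| eLnil v : evalList [] v []
| eLcons g gs v w ws : eval g v w -> evalList gs v ws -> evalList (g :: gs) v (w :: ws).

Definition computable_fun (f : nat -> nat) : Prop :=
  exists c : PR, forall x, eval c [x] (f x).

Definition computable_rel (k : nat) (R : list nat -> Prop) : Prop :=
  exists c : PR, forall v, length v = k ->
    (R v -> eval c v 1) /\ (~ R v -> eval c v 0).

(* Arithmetical hierarchy for k-ary relations:
   Sigma^0_0 = computable;  Sigma^0_{m+1} = exists-projection of a Pi^0_m relation;
   Pi^0_m R  := Sigma^0_m of the complement of R. *)
Fixpoint Sigma (n k : nat) (R : list nat -> Prop) : Prop :=
  match n with
  | 0 => computable_rel k R
  | S m => exists T : list nat -> Prop,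
             Sigma m (S k) (fun v => ~ T v) /\
             (forall v, length v = k -> (R v <-> exists y, T (y :: v)))
  end.

Definition Pi (n k : nat) (R : list nat -> Prop) : Prop :=
  Sigma n k (fun v => ~ R v).

Definition rel2 (E : nat -> nat -> Prop) : list nat -> Prop :=
  fun v => match v with [a; b] => E a b | _ => False end.

Definition Sigma_rel (n : nat) (E : nat -> nat -> Prop) : Prop := Sigma n 2 (rel2 E).
Definition Pi_rel (n : nat) (E : nat -> nat -> Prop) : Prop := Pi n 2 (rel2 E).

Definition equivalence_rel (E : nat -> nat -> Prop) : Prop :=
  (forall a, E a a) /\ (forall a b, E a b -> E b a) /\
  (forall a b c, E a b -> E b c -> E a c).

Definition universal_Sigma (n : nat) (E : nat -> nat -> Prop) : Prop :=
  equivalence_rel E /\ Sigma_rel n E /\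
  forall F : nat -> nat -> Prop, equivalence_rel F -> Sigma_rel n F ->
    exists f : nat -> nat, computable_fun f /\
      forall a b, F a b <-> E (f a) (f b).

Inductive walk (G : nat -> nat -> Prop) : nat -> nat -> nat -> Prop :=
| walk0 a : walk G 0 a a
| walkS m a b c : G a b -> walk G m b c -> walk G (S m) a c.

Definition connected (G : nat -> nat -> Prop) (a b : nat) : Prop :=
  exists m, walk G m a b.

Definition simple_graph (G : nat -> nat -> Prop) : Prop :=
  (forall a, ~ G a a) /\ (forall a b, G a b -> G b a).

Definition diam_le (G : nat -> nat -> Prop) (k : nat) : Prop :=
  forall a b, connected G a b -> exists m, m <= k /\ walk G m a b.

Definition Pi_graphable_diam (p : nat) (E : nat -> nat -> Prop) (k : nat) : Prop :=
  exists G : nat -> nat -> Prop,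
    simple_graph G /\ Pi_rel p G /\
    (forall a b, connected G a b <-> E a b) /\
    diam_le G k /\ (forall j, diam_le G j -> k <= j).

From Stdlib Require Import List Arith Lia Cantor Classical Setoid.
Import ListNotations.

(* Let m = n - 1.  Through Kleene's normal form (derivations of partial
   recursive computations, checked by a bounded formula) the Sigma^0_(m+1)
   binary relations are enumerated as [W_e x y <-> exists w, ~ P w x y e] for a
   fixed Sigma^0_m relation [P].  The graph has, for each index [e], a vertex
   for every chain [a = x_0, ..., x_k = b] whose steps [x_i -- x_(i+1)] carry a
   witness of [W_e] in one direction or the other; two such vertices with the
   same index are adjacent when their chains share an endpoint.  Being a vertex
   is Pi^0_m, so the graph is, and two vertices are connected iff their starts
   are related by the equivalence relation generated by [W_e], which is
   Sigma^0_(m+1).  Connected vertices [u], [u'] are joined through the vertex of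
   a chain from the start of [u] to the start of [u'], so these components have
   diameter at most 2; a separate path 0 - 1 - 2 - 3 makes the diameter 3.  A
   Sigma^0_(m+1) equivalence relation [F] is some [W_e], and is reduced to
   connectedness by sending [x] to the empty chain at [x] with index [e]. *)

(** * Arithmetic programs *)

Lemma eval_proj i v y : i < length v -> nth i v 0 = y -> eval (PProj i) v y.
Proof. intros H <-. now constructor. Qed.

Definition prAdd := PRec (PProj 0) (PComp PSucc [PProj 1]).

Lemma eval_prAdd a b : eval prAdd [a; b] (a + b).
Proof.
  induction a; simpl.
  - apply eRec0. apply eval_proj; simpl; auto.
  - eapply eRecS; [exact IHa|].
    eapply eComp; [repeat constructor; simpl; lia|constructor].
Qed.

Definition prMul := PRec PZero (PComp prAdd [PProj 1; PProj 2]).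

Lemma eval_prMul a b : eval prMul [a; b] (a * b).
Proof.
  induction a; simpl.
  - apply eRec0. constructor.
  - eapply eRecS; [exact IHa|].
    eapply eComp; [repeat constructor; simpl; lia|].
    replace (b + a * b) with (a * b + b) by lia. apply eval_prAdd.
Qed.

Definition prPred := PRec PZero (PProj 0).

Lemma eval_prPred a : eval prPred [a] (pred a).
Proof.
  induction a; simpl.
  - apply eRec0. constructor.
  - eapply eRecS; [exact IHa|]. apply eval_proj; simpl; auto; lia.
Qed.

Definition prSub :=
  PComp (PRec (PProj 0) (PComp prPred [PProj 1])) [PProj 1; PProj 0].

Lemma eval_prSub a b : eval prSub [a; b] (a - b).
Proof.
  eapply eComp; [repeat constructor; simpl; lia|].
  induction b; simpl.
  - apply eRec0. apply eval_proj; simpl; auto; lia.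
  - eapply eRecS; [exact IHb|].
    eapply eComp; [repeat constructor; simpl; lia|].
    replace (a - S b) with (pred (a - b)) by lia. apply eval_prPred.
Qed.

Definition prConst n := Nat.iter n (fun c => PComp PSucc [c]) PZero.

Lemma eval_prConst n v : eval (prConst n) v n.
Proof.
  induction n; simpl; [constructor|].
  eapply eComp; [constructor; [exact IHn|constructor]|constructor].
Qed.

Fixpoint prProjs (s k : nat) : list PR :=
  match k with 0 => [] | S k' => PProj s :: prProjs (S s) k' end.

Lemma eval_prProjs s k l :
  s + k <= length l -> evalList (prProjs s k) l (firstn k (skipn s l)).
Proof.
  revert s. induction k; intros s H; simpl; [constructor|].
  assert (Hs : skipn s l = nth s l 0 :: skipn (S s) l).
  { clear -H. revert l H. induction s; intros [|x l] H; simpl in *; try lia; auto.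
    apply IHs. lia. }
  rewrite Hs. simpl. constructor; [constructor; lia|]. apply IHk. lia.
Qed.

Lemma eval_prProjs_all l : evalList (prProjs 0 (length l)) l l.
Proof.
  pose proof (eval_prProjs 0 (length l) l) as H. rewrite firstn_all in H. apply H. lia.
Qed.

Lemma eval_prProjs_skip2 i r l : evalList (prProjs 2 (length l)) (i :: r :: l) l.
Proof.
  pose proof (eval_prProjs 2 (length l) (i :: r :: l)) as H. simpl in H.
  rewrite firstn_all in H. apply H. lia.
Qed.

(** * Arithmetic terms *)

(* Variables are de Bruijn indices into the environment, onto which [Rec] and
   [Sum] push their bound variables (see [tval]). *)
Inductive term : Type :=
| Var : nat -> term
| Cst : nat -> term
| Plus : term -> term -> term
| Monus : term -> term -> term
| Times : term -> term -> term
| Rec : term -> term -> term -> term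
| Sum : term -> term -> term
| App : term -> list term -> term.

Section TermInd.
Variable P : term -> Prop.
Hypothesis hVar : forall i, P (Var i).
Hypothesis hCst : forall n, P (Cst n).
Hypothesis hPlus : forall a b, P a -> P b -> P (Plus a b).
Hypothesis hMonus : forall a b, P a -> P b -> P (Monus a b).
Hypothesis hTimes : forall a b, P a -> P b -> P (Times a b).
Hypothesis hRec : forall a b c, P a -> P b -> P c -> P (Rec a b c).
Hypothesis hSum : forall a b, P a -> P b -> P (Sum a b).
Hypothesis hApp : forall f args, P f -> Forall P args -> P (App f args).

Fixpoint term_ind' (t : term) : P t :=
  match t with
  | Var i => hVar i
  | Cst n => hCst n
  | Plus a b => hPlus a b (term_ind' a) (term_ind' b)
  | Monus a b => hMonus a b (term_ind' a) (term_ind' b)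
  | Times a b => hTimes a b (term_ind' a) (term_ind' b)
  | Rec a b c => hRec a b c (term_ind' a) (term_ind' b) (term_ind' c)
  | Sum a b => hSum a b (term_ind' a) (term_ind' b)
  | App f args => hApp f args (term_ind' f)
      ((fix go (l : list term) : Forall P l :=
         match l with
         | [] => Forall_nil _
         | a :: l' => Forall_cons _ (term_ind' a) (go l')
         end) args)
  end.
End TermInd.

Fixpoint sum_lt (N : nat) (f : nat -> nat) : nat :=
  match N with 0 => 0 | S N' => sum_lt N' f + f N' end.

Fixpoint prim_rec (N z : nat) (s : nat -> nat -> nat) : nat :=
  match N with 0 => z | S N' => s N' (prim_rec N' z s) end.

Fixpoint tval (t : term) (env : list nat) : nat :=
  match t with
  | Var i => nth i env 0
  | Cst n => n
  | Plus a b => tval a env + tval b env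
  | Monus a b => tval a env - tval b env
  | Times a b => tval a env * tval b env
  | Rec n z s => prim_rec (tval n env) (tval z env) (fun i r => tval s (i :: r :: env))
  | Sum n b => sum_lt (tval n env) (fun i => tval b (i :: env))
  | App f args => tval f (map (fun a => tval a env) args)
  end.

Fixpoint compile (k : nat) (t : term) : PR :=
  match t with
  | Var i => if i <? k then PProj i else PZero
  | Cst n => prConst n
  | Plus a b => PComp prAdd [compile k a; compile k b]
  | Monus a b => PComp prSub [compile k a; compile k b]
  | Times a b => PComp prMul [compile k a; compile k b]
  | Rec n z s =>
      PComp (PRec (compile k z) (compile (S (S k)) s)) (compile k n :: prProjs 0 k)
  | Sum n b =>
      PComp (PRec PZero
               (PComp prAdd [PProj 1; PComp (compile (S k) b) (PProj 0 :: prProjs 2 k)]))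
            (compile k n :: prProjs 0 k)
  | App f args => PComp (compile (length args) f) (map (compile k) args)
  end.

Lemma compile_correct t : forall env, eval (compile (length env) t) env (tval t env).
Proof.
  induction t using term_ind'; intros env; simpl.
  - destruct (Nat.ltb_spec i (length env)); [constructor; lia|].
    rewrite nth_overflow by lia. constructor.
  - apply eval_prConst.
  - eapply eComp; [repeat constructor; eauto|apply eval_prAdd].
  - eapply eComp; [repeat constructor; eauto|apply eval_prSub].
  - eapply eComp; [repeat constructor; eauto|apply eval_prMul].
  - eapply eComp; [constructor; [apply IHt1|apply eval_prProjs_all]|].
    induction (tval t1 env); simpl.
    + apply eRec0. auto.
    + eapply eRecS; [eauto|]. apply (IHt3 (n :: _ :: env)).
  - eapply eComp; [constructor; [apply IHt1|apply eval_prProjs_all]|].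
    induction (tval t1 env); simpl.
    + apply eRec0. constructor.
    + eapply eRecS; [eauto|].
      eapply eComp; [|apply eval_prAdd].
      constructor; [apply eval_proj; simpl; auto; lia|].
      constructor; [|constructor].
      eapply eComp; [constructor; [constructor; simpl; lia|apply eval_prProjs_skip2]|].
      apply (IHt2 (n :: env)).
  - eapply eComp; [|rewrite <- (length_map (fun a => tval a env) args); apply IHt].
    induction H; simpl; constructor; auto.
Qed.

(** * Bounded formulas *)

Inductive formula : Type :=
| FTerm : term -> formula
| FEq : term -> term -> formula
| FLt : term -> term -> formula
| FAnd : formula -> formula -> formula
| FOr : formula -> formula -> formula
| FNot : formula -> formula
| FImpl : formula -> formula -> formula
| FExLt : term -> formula -> formula
| FAllLt : term -> formula -> formula.

Fixpoint sat (f : formula) (env : list nat) : Prop :=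
  match f with
  | FTerm t => tval t env <> 0
  | FEq a b => tval a env = tval b env
  | FLt a b => tval a env < tval b env
  | FAnd f g => sat f env /\ sat g env
  | FOr f g => sat f env \/ sat g env
  | FNot f => ~ sat f env
  | FImpl f g => sat f env -> sat g env
  | FExLt n f => exists i, i < tval n env /\ sat f (i :: env)
  | FAllLt n f => forall i, i < tval n env -> sat f (i :: env)
  end.

Definition FNe a b := FNot (FEq a b).

Fixpoint char_term (f : formula) : term :=
  match f with
  | FTerm t => t
  | FEq a b => Monus (Cst 1) (Plus (Monus a b) (Monus b a))
  | FLt a b => Monus b a
  | FAnd f g => Times (char_term f) (char_term g)
  | FOr f g => Plus (char_term f) (char_term g)
  | FNot f => Monus (Cst 1) (char_term f)
  | FImpl f g => Plus (Monus (Cst 1) (char_term f)) (char_term g)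
  | FExLt n f => Sum n (char_term f)
  | FAllLt n f => Monus (Cst 1) (Sum n (Monus (Cst 1) (char_term f)))
  end.

Lemma sum_lt_neq0 N g : sum_lt N g <> 0 <-> exists i, i < N /\ g i <> 0.
Proof.
  induction N; simpl.
  - split; [lia|]. intros (i & H & _); lia.
  - split.
    + intros H. destruct (Nat.eq_dec (g N) 0) as [E|E].
      * destruct (proj1 IHN) as (i & ? & ?); [lia|]. exists i. split; auto; lia.
      * exists N. split; auto.
    + intros (i & H1 & H2). destruct (Nat.eq_dec i N); [subst; lia|].
      enough (sum_lt N g <> 0) by lia. apply IHN. exists i. split; auto; lia.
Qed.

Lemma char_term_neq0 f env : tval (char_term f) env <> 0 <-> sat f env.
Proof.
  revert env; induction f; intros env; cbn [char_term sat tval];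
    try rewrite <- IHf; try rewrite <- IHf1; try rewrite <- IHf2; try lia.
  - rewrite sum_lt_neq0. split; intros (i & ? & ?); exists i; split; auto; apply IHf; auto.
  - set (bad := sum_lt _ _).
    assert (Hbad : bad <> 0 <-> exists i, i < tval t env /\ ~ sat f (i :: env)).
    { unfold bad. rewrite sum_lt_neq0.
      split; intros (i & ? & H); exists i; split; auto; rewrite <- IHf in *; lia. }
    split.
    + intros H i Hi. apply NNPP. intro Hf. enough (bad <> 0) by lia. apply Hbad. eauto.
    + intros H. enough (bad = 0) by lia. apply NNPP. intro Hne.
      apply Hbad in Hne as (i & Hi & Hf). auto.
Qed.

Definition indicator (f : formula) : term := Monus (Cst 1) (Monus (Cst 1) (char_term f)).

Lemma indicator_true f env : sat f env -> tval (indicator f) env = 1.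
Proof. rewrite <- char_term_neq0. unfold indicator. cbn [tval]. lia. Qed.

Lemma indicator_false f env : ~ sat f env -> tval (indicator f) env = 0.
Proof. rewrite <- char_term_neq0. unfold indicator. cbn [tval]. lia. Qed.

Lemma computable_sat k f : computable_rel k (sat f).
Proof.
  exists (compile k (indicator f)). intros v <-. split; intros H.
  - rewrite <- (indicator_true f v H). apply compile_correct.
  - rewrite <- (indicator_false f v H). apply compile_correct.
Qed.

(* Substitution of terms for the free variables of a formula. *)
Definition FCall (f : formula) (args : list term) : formula := FTerm (App (indicator f) args).

Lemma sat_FCall f args env : sat (FCall f args) env <-> sat f (map (fun a => tval a env) args).
Proof.
  unfold FCall. cbn [sat tval]. rewrite <- char_term_neq0. unfold indicator. cbn [tval]. lia.
Qed.

Definition IfT (c : formula) (a b : term) : term :=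
  Plus (Times (indicator c) a) (Times (indicator (FNot c)) b).

Lemma tval_IfT_true c a b env : sat c env -> tval (IfT c a b) env = tval a env.
Proof.
  intros H. unfold IfT. cbn [tval]. rewrite indicator_true, indicator_false by (cbn; tauto). lia.
Qed.

Lemma tval_IfT_false c a b env : ~ sat c env -> tval (IfT c a b) env = tval b env.
Proof.
  intros H. unfold IfT. cbn [tval]. rewrite indicator_false, indicator_true by (cbn; tauto). lia.
Qed.

(** * Pairing and codes of lists *)

Definition pair (x y : nat) : nat := Cantor.to_nat (x, y).
Definition p1 (n : nat) : nat := fst (Cantor.of_nat n).
Definition p2 (n : nat) : nat := snd (Cantor.of_nat n).

Lemma p1_pair x y : p1 (pair x y) = x.
Proof. unfold p1, pair. now rewrite cancel_of_to. Qed.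

Lemma p2_pair x y : p2 (pair x y) = y.
Proof. unfold p2, pair. now rewrite cancel_of_to. Qed.

Lemma pair_p1_p2 n : pair (p1 n) (p2 n) = n.
Proof. unfold p1, p2, pair. rewrite <- surjective_pairing. apply cancel_to_of. Qed.

Lemma pair_inj x y x' y' : pair x y = pair x' y' -> x = x' /\ y = y'.
Proof.
  intros H. split; [apply (f_equal p1) in H|apply (f_equal p2) in H];
    now rewrite ?p1_pair, ?p2_pair in H.
Qed.

Lemma pair_ge x y : x + y <= pair x y.
Proof. unfold pair. pose proof (to_nat_non_decreasing x y). lia. Qed.

Lemma p1_p2_le n : p1 n + p2 n <= n.
Proof. rewrite <- (pair_p1_p2 n) at 3. apply pair_ge. Qed.

Definition pair_tm : term :=
  Plus (Var 1) (Sum (Plus (Var 1) (Var 0)) (Plus (Var 0) (Cst 1))).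

Lemma tval_pair_tm x y : tval pair_tm [x; y] = pair x y.
Proof.
  unfold pair_tm, pair, to_nat. simpl. f_equal.
  induction (y + x); simpl; auto. rewrite IHn. lia.
Qed.

Definition pairT a b := App pair_tm [a; b].

Lemma tval_pairT a b env : tval (pairT a b) env = pair (tval a env) (tval b env).
Proof. apply tval_pair_tm. Qed.

Lemma sum_lt_single N f i0 :
  i0 < N -> (forall i, i < N -> i <> i0 -> f i = 0) -> sum_lt N f = f i0.
Proof.
  induction N; intros H1 H2; simpl; [lia|].
  destruct (Nat.eq_dec i0 N) as [->|].
  - enough (sum_lt N f = 0) by lia.
    clear -H2. induction N; simpl; auto.
    rewrite IHN, H2; [reflexivity|lia|lia|intros; apply H2; lia].
  - rewrite IHN, (H2 N); [lia|lia|lia|lia|intros; apply H2; lia].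
Qed.

Definition the_lt (n : term) (f : formula) : term := Sum n (Times (Var 0) (indicator f)).

Lemma tval_the_lt n f env i0 :
  i0 < tval n env -> (forall i, i < tval n env -> sat f (i :: env) <-> i = i0) ->
  tval (the_lt n f) env = i0.
Proof.
  intros Hi0 Hf. unfold the_lt. cbn [tval]. rewrite (sum_lt_single _ _ i0); auto.
  - cbn [tval nth]. rewrite indicator_true by (apply Hf; auto). lia.
  - intros i Hi Hne. cbn [tval nth].
    rewrite indicator_false by (rewrite Hf; auto). lia.
Qed.

Definition p1_tm : term :=
  the_lt (Plus (Var 0) (Cst 1))
    (FExLt (Plus (Var 1) (Cst 1)) (FEq (pairT (Var 1) (Var 0)) (Var 2))).
Definition p2_tm : term :=
  the_lt (Plus (Var 0) (Cst 1))
    (FExLt (Plus (Var 1) (Cst 1)) (FEq (pairT (Var 0) (Var 1)) (Var 2))).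

Lemma tval_p1_tm n : tval p1_tm [n] = p1 n.
Proof.
  pose proof (p1_p2_le n). apply tval_the_lt; cbn [tval nth]; [lia|].
  intros x Hx. cbn [sat tval nth]. setoid_rewrite tval_pairT. cbn [tval nth]. split.
  - intros (y & _ & <-). symmetry. apply p1_pair.
  - intros ->. exists (p2 n). split; [lia|apply pair_p1_p2].
Qed.

Lemma tval_p2_tm n : tval p2_tm [n] = p2 n.
Proof.
  pose proof (p1_p2_le n). apply tval_the_lt; cbn [tval nth]; [lia|].
  intros y Hy. cbn [sat tval nth]. setoid_rewrite tval_pairT. cbn [tval nth]. split.
  - intros (x & _ & <-). symmetry. apply p2_pair.
  - intros ->. exists (p1 n). split; [lia|apply pair_p1_p2].
Qed.

Definition p1T a := App p1_tm [a].
Definition p2T a := App p2_tm [a].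

Lemma tval_p1T a env : tval (p1T a) env = p1 (tval a env).
Proof. apply tval_p1_tm. Qed.

Lemma tval_p2T a env : tval (p2T a) env = p2 (tval a env).
Proof. apply tval_p2_tm. Qed.

Definition triple c v y := pair c (pair v y).
Definition tripleT c v y := pairT c (pairT v y).

Lemma tval_tripleT c v y env :
  tval (tripleT c v y) env = triple (tval c env) (tval v env) (tval y env).
Proof. unfold tripleT. now rewrite !tval_pairT. Qed.

Fixpoint code_list (l : list nat) : nat :=
  match l with [] => 0 | x :: l' => S (pair x (code_list l')) end.

Definition cons_code x L := S (pair x L).
Definition hd_code (L : nat) := p1 (L - 1).
Definition tl_code (L : nat) := p2 (L - 1).
Definition skip_code (j L : nat) := prim_rec j L (fun _ r => tl_code r).
Definition nth_code j L := hd_code (skip_code j L).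

Lemma cons_code_list x l : cons_code x (code_list l) = code_list (x :: l).
Proof. reflexivity. Qed.

Lemma hd_code_cons x l : hd_code (code_list (x :: l)) = x.
Proof. unfold hd_code; simpl. rewrite Nat.sub_0_r. apply p1_pair. Qed.

Lemma tl_code_cons x l : tl_code (code_list (x :: l)) = code_list l.
Proof. unfold tl_code; simpl. rewrite Nat.sub_0_r. apply p2_pair. Qed.

Lemma skip_code_list j l : skip_code j (code_list l) = code_list (skipn j l).
Proof.
  unfold skip_code. induction j; cbn [prim_rec]; auto. rewrite IHj.
  rewrite <- (skipn_skipn 1 j).
  destruct (skipn j l); [reflexivity|apply tl_code_cons].
Qed.

Lemma code_list_eq0 l : code_list l = 0 <-> l = [].
Proof. destruct l; simpl; split; congruence. Qed.

Lemma skip_code_neq0 j l : skip_code j (code_list l) <> 0 <-> j < length l.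
Proof.
  rewrite skip_code_list, code_list_eq0, <- length_zero_iff_nil, length_skipn. lia.
Qed.

Lemma nth_code_list j l : j < length l -> nth_code j (code_list l) = nth j l 0.
Proof.
  intros H. unfold nth_code. rewrite skip_code_list.
  revert l H; induction j; intros [|x l] H; simpl in *; try lia.
  - apply hd_code_cons.
  - apply IHj. lia.
Qed.

Lemma length_le_code_list l : length l <= code_list l.
Proof. induction l; simpl; auto. pose proof (pair_ge a (code_list l)). lia. Qed.

Lemma code_list_inj l l' : code_list l = code_list l' -> l = l'.
Proof.
  revert l'; induction l; intros [|x l'] H; simpl in *; try congruence.
  injection H as H. apply pair_inj in H as [-> H]. f_equal. auto.
Qed.

(* [n] steps suffice: both components of [pair x y] are at most [pair x y]. *)
Fixpoint decode_fuel (fuel n : nat) : list nat :=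
  match fuel, n with
  | S f, S n' => p1 n' :: decode_fuel f (p2 n')
  | _, _ => []
  end.

Definition decode n := decode_fuel n n.

Lemma code_list_decode_fuel fuel n : n <= fuel -> code_list (decode_fuel fuel n) = n.
Proof.
  revert n; induction fuel; intros [|n] H; simpl; auto; try lia.
  pose proof (p1_p2_le n). rewrite IHfuel, pair_p1_p2 by lia. reflexivity.
Qed.

Lemma code_list_decode n : code_list (decode n) = n.
Proof. apply code_list_decode_fuel. auto. Qed.

Lemma decode_code_list l : decode (code_list l) = l.
Proof. apply code_list_inj. apply code_list_decode. Qed.

Lemma code_list_surj n : exists l, code_list l = n.
Proof. exists (decode n). apply code_list_decode. Qed.

Definition consT a b := Plus (Cst 1) (pairT a b).
Definition hdT L := p1T (Monus L (Cst 1)).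
Definition tlT L := p2T (Monus L (Cst 1)).
Definition skipT j L := App (Rec (Var 0) (Var 1) (tlT (Var 1))) [j; L].
Definition nthT j L := hdT (skipT j L).

Fixpoint code_listT (l : list term) : term :=
  match l with [] => Cst 0 | a :: l' => consT a (code_listT l') end.

Lemma tval_consT a b env : tval (consT a b) env = cons_code (tval a env) (tval b env).
Proof. unfold consT. cbn [tval]. now rewrite tval_pairT. Qed.

Lemma tval_hdT a env : tval (hdT a) env = hd_code (tval a env).
Proof. unfold hdT. now rewrite tval_p1T. Qed.

Lemma tval_tlT a env : tval (tlT a) env = tl_code (tval a env).
Proof. unfold tlT. now rewrite tval_p2T. Qed.

Lemma tval_skipT j L env : tval (skipT j L) env = skip_code (tval j env) (tval L env).
Proof.
  unfold skipT, skip_code. cbn [tval map nth].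
  generalize (tval j env) at 2 as m. induction (tval j env); intros m; cbn [prim_rec]; auto.
  rewrite tval_tlT. cbn [tval nth]. now rewrite IHn.
Qed.

Lemma tval_nthT j L env : tval (nthT j L) env = nth_code (tval j env) (tval L env).
Proof. unfold nthT. now rewrite tval_hdT, tval_skipT. Qed.

Lemma tval_code_listT l env : tval (code_listT l) env = code_list (map (fun a => tval a env) l).
Proof. induction l; cbn [code_listT map]; auto. now rewrite tval_consT, IHl. Qed.

#[global] Opaque pairT p1T p2T tripleT consT hdT tlT skipT nthT.

(** * Derivations of partial recursive computations *)

Fixpoint code (c : PR) : nat :=
  match c with
  | PZero => pair 0 0
  | PSucc => pair 1 0
  | PProj i => pair 2 i
  | PComp f gs => pair 3 (pair (code f) (code_list (map code gs)))
  | PRec f g => pair 4 (pair (code f) (code g))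
  | PMu f => pair 5 (code f)
  end.

(* A derivation is the code of a list of nodes [pair (triple c v y) aux], each
   asserting that the program coded by [c] maps the arguments coded by [v] to
   [y]; [aux] codes the intermediate values of a composition, or the value of
   the previous step of a recursion.  The premises of a node must occur
   strictly later in the list, which makes the checking bounded and the
   soundness proof well founded. *)
Definition node_prog n := p1 (p1 n).
Definition node_input n := p1 (p2 (p1 n)).
Definition node_output n := p2 (p2 (p1 n)).
Definition node_aux n := p2 n.

Definition asserts (J n : nat) : Prop := p1 n = J.
Definition succeeds (f v n : nat) : Prop :=
  node_prog n = f /\ node_input n = v /\ node_output n <> 0.

Definition occurs_later (j J d : nat) : Prop :=
  exists j', j' < d /\ (j < j' /\ (skip_code j' d <> 0 /\ asserts J (nth_code j' d))).

Definition occurs_later_pos (j f v d : nat) : Prop :=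
  exists j', j' < d /\ (j < j' /\ (skip_code j' d <> 0 /\ succeeds f v (nth_code j' d))).

(* [lat J]: the assertion [J] is an available premise; [latNZ f v]: an
   available premise asserts that the program [f] maps [v] to a positive value.
   Quantifiers over list positions are bounded by the list codes, as
   [length l <= code_list l]. *)
Definition rule_ok (c v y aux : nat) (lat : nat -> Prop) (latNZ : nat -> nat -> Prop) : Prop :=
  (p1 c = 0 /\ y = 0) \/
  (p1 c = 1 /\ (v <> 0 /\ y = hd_code v + 1)) \/
  (p1 c = 2 /\ (skip_code (p2 c) v <> 0 /\ y = nth_code (p2 c) v)) \/
  (p1 c = 3 /\ (lat (triple (p1 (p2 c)) aux y) /\
    ((forall i, i < p2 (p2 c) + aux + 1 ->
       ((skip_code i (p2 (p2 c)) <> 0 -> skip_code i aux <> 0) /\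
        (skip_code i aux <> 0 -> skip_code i (p2 (p2 c)) <> 0))) /\
     (forall i, i < p2 (p2 c) + 1 -> (skip_code i (p2 (p2 c)) <> 0 ->
        lat (triple (nth_code i (p2 (p2 c))) v (nth_code i aux))))))) \/
  (p1 c = 4 /\ (v <> 0 /\
    ((hd_code v = 0 /\ lat (triple (p1 (p2 c)) (tl_code v) y)) \/
     (hd_code v <> 0 /\
      (lat (triple c (cons_code (hd_code v - 1) (tl_code v)) aux) /\
       lat (triple (p2 (p2 c)) (cons_code (hd_code v - 1) (cons_code aux (tl_code v))) y)))))) \/
  (p1 c = 5 /\ (lat (triple (p2 c) (cons_code y v) 0) /\
    (forall z, z < y -> latNZ (p2 c) (cons_code z v)))).

Definition node_ok (j d : nat) : Prop :=
  let n := nth_code j d in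
  rule_ok (node_prog n) (node_input n) (node_output n) (node_aux n)
    (fun J => occurs_later j J d) (fun f v => occurs_later_pos j f v d).

Definition valid (d : nat) : Prop :=
  d <> 0 /\ (forall j, j < d -> skip_code j d <> 0 -> node_ok j d).

Definition derives (d c v y : nat) : Prop := valid d /\ p1 (hd_code d) = triple c v y.

Lemma rule_ok_mono c v y aux (lat lat' : nat -> Prop) (lz lz' : nat -> nat -> Prop) :
  (forall J, lat J -> lat' J) -> (forall f v, lz f v -> lz' f v) ->
  rule_ok c v y aux lat lz -> rule_ok c v y aux lat' lz'.
Proof.
  intros H1 H2. unfold rule_ok.
  intros [H|[H|[H|[(? & ? & ? & H)|[(? & ? & H)|(? & ? & H)]]]]].
  - left; auto.
  - right; left; auto.
  - right; right; left; auto.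
  - do 3 right; left. do 3 (split; [auto|]). intros k Hk Hn. apply H1, H; auto.
  - do 4 right; left. split; [auto|]. split; [auto|].
    destruct H as [(? & ?)|(? & ? & ?)]; [left|right]; repeat split; auto.
  - do 5 right. repeat split; auto.
Qed.

Lemma iff_and A B A' B' : (A <-> A') -> (B <-> B') -> (A /\ B <-> A' /\ B').
Proof. tauto. Qed.
Lemma iff_or A B A' B' : (A <-> A') -> (B <-> B') -> (A \/ B <-> A' \/ B').
Proof. tauto. Qed.
Lemma iff_not A A' : (A <-> A') -> (~ A <-> ~ A').
Proof. tauto. Qed.
Lemma iff_imp A B A' B' : (A <-> A') -> (B <-> B') -> ((A -> B) <-> (A' -> B')).
Proof. tauto. Qed.
Lemma iff_all_lt N N' (P Q : nat -> Prop) : N = N' -> (forall i, i < N -> (P i <-> Q i)) ->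
  ((forall i, i < N -> P i) <-> (forall i, i < N' -> Q i)).
Proof. intros <- H. split; intros H' i Hi; apply H; auto. Qed.
Lemma iff_ex {A} (P Q : A -> Prop) :
  (forall x, P x <-> Q x) -> ((exists x, P x) <-> (exists x, Q x)).
Proof. intros H; split; intros [x Hx]; exists x; apply H; auto. Qed.

Definition occurs_later_fm : formula :=
  FExLt (Var 2) (FAnd (FLt (Var 1) (Var 0))
    (FAnd (FTerm (skipT (Var 0) (Var 3))) (FEq (p1T (nthT (Var 0) (Var 3))) (Var 2)))).

Lemma sat_occurs_later_fm j J d : sat occurs_later_fm [j; J; d] <-> occurs_later j J d.
Proof.
  unfold occurs_later_fm, occurs_later, asserts. cbn [sat tval nth].
  setoid_rewrite tval_skipT. setoid_rewrite tval_p1T. setoid_rewrite tval_nthT.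
  reflexivity.
Qed.

Definition node_progT n := p1T (p1T n).
Definition node_inputT n := p1T (p2T (p1T n)).
Definition node_outputT n := p2T (p2T (p1T n)).
Definition node_auxT n := p2T n.

Lemma tval_node_fields n env :
  tval (node_progT n) env = node_prog (tval n env) /\
  tval (node_inputT n) env = node_input (tval n env) /\
  tval (node_outputT n) env = node_output (tval n env) /\
  tval (node_auxT n) env = node_aux (tval n env).
Proof.
  unfold node_progT, node_inputT, node_outputT, node_auxT.
  now rewrite ?tval_p1T, ?tval_p2T, ?tval_p1T.
Qed.

Definition occurs_later_pos_fm : formula :=
  FExLt (Var 3) (FAnd (FLt (Var 1) (Var 0)) (FAnd (FTerm (skipT (Var 0) (Var 4)))
    (FAnd (FEq (node_progT (nthT (Var 0) (Var 4))) (Var 2))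
     (FAnd (FEq (node_inputT (nthT (Var 0) (Var 4))) (Var 3))
           (FNe (node_outputT (nthT (Var 0) (Var 4))) (Cst 0)))))).

Lemma sat_occurs_later_pos_fm j f v d :
  sat occurs_later_pos_fm [j; f; v; d] <-> occurs_later_pos j f v d.
Proof.
  unfold occurs_later_pos_fm, occurs_later_pos, succeeds, FNe. cbn [sat tval nth].
  apply iff_ex; intro i.
  destruct (tval_node_fields (nthT (Var 0) (Var 4)) (i :: [j; f; v; d])) as (-> & -> & -> & _).
  now rewrite tval_skipT, tval_nthT.
Qed.

Definition FOccursLater j J d := FCall occurs_later_fm [j; J; d].
Definition FOccursLaterPos j f v d := FCall occurs_later_pos_fm [j; f; v; d].

Lemma sat_FOccursLater j J d env :
  sat (FOccursLater j J d) env <-> occurs_later (tval j env) (tval J env) (tval d env).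
Proof. unfold FOccursLater. now rewrite sat_FCall, <- sat_occurs_later_fm. Qed.

Lemma sat_FOccursLaterPos j f v d env :
  sat (FOccursLaterPos j f v d) env <->
  occurs_later_pos (tval j env) (tval f env) (tval v env) (tval d env).
Proof. unfold FOccursLaterPos. now rewrite sat_FCall, <- sat_occurs_later_pos_fm. Qed.

Ltac tval_simpl :=
  repeat first
    [ rewrite sat_FOccursLater | rewrite sat_FOccursLaterPos
    | rewrite tval_p1T | rewrite tval_p2T | rewrite tval_skipT | rewrite tval_nthT
    | rewrite tval_hdT | rewrite tval_tlT | rewrite tval_consT | rewrite tval_tripleT
    | progress cbn [tval nth] ];
  try reflexivity.

(* Proves [sat f env <-> P] when [P] is the transcription of [f]. *)
Ltac sat_transcribe :=
  match goal with
  | |- (_ /\ _) <-> (_ /\ _) => apply iff_and; [sat_transcribe|sat_transcribe]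
  | |- (_ \/ _) <-> (_ \/ _) => apply iff_or; [sat_transcribe|sat_transcribe]
  | |- (~ _) <-> (~ _) => apply iff_not; sat_transcribe
  | |- (forall x, x < ?N -> @?P x) <-> (forall x, x < ?N' -> @?Q x) =>
      apply (iff_all_lt N N' P Q);
      [tval_simpl | let i := fresh "i" in intros i ?; cbn beta; sat_transcribe]
  | |- (?A -> ?B) <-> (?A' -> ?B') => apply iff_imp; [sat_transcribe|sat_transcribe]
  | |- _ => tval_simpl
  end.

Section RuleFormula.
(* Environment: [j; d; c; v; y; aux]; [comp_args1] is [comp_args] under a binder. *)
Let tag := p1T (Var 2).
Let arg := p2T (Var 2).
Let comp_args := p2T (p2T (Var 2)).
Let comp_args1 := p2T (p2T (Var 3)).

Definition rule_zero_fm := FAnd (FEq tag (Cst 0)) (FEq (Var 4) (Cst 0)).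

Definition rule_succ_fm :=
  FAnd (FEq tag (Cst 1)) (FAnd (FNe (Var 3) (Cst 0)) (FEq (Var 4) (Plus (hdT (Var 3)) (Cst 1)))).

Definition rule_proj_fm :=
  FAnd (FEq tag (Cst 2)) (FAnd (FTerm (skipT arg (Var 3))) (FEq (Var 4) (nthT arg (Var 3)))).

Definition rule_comp_fm :=
  FAnd (FEq tag (Cst 3))
   (FAnd (FOccursLater (Var 0) (tripleT (p1T arg) (Var 5) (Var 4)) (Var 1))
   (FAnd (FAllLt (Plus (Plus comp_args (Var 5)) (Cst 1))
            (FAnd (FImpl (FTerm (skipT (Var 0) comp_args1)) (FTerm (skipT (Var 0) (Var 6))))
                  (FImpl (FTerm (skipT (Var 0) (Var 6))) (FTerm (skipT (Var 0) comp_args1)))))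
         (FAllLt (Plus comp_args (Cst 1))
            (FImpl (FTerm (skipT (Var 0) comp_args1))
               (FOccursLater (Var 1)
                  (tripleT (nthT (Var 0) comp_args1) (Var 4) (nthT (Var 0) (Var 6)))
                  (Var 2)))))).

Definition rule_rec_fm :=
  FAnd (FEq tag (Cst 4)) (FAnd (FNe (Var 3) (Cst 0))
   (FOr (FAnd (FEq (hdT (Var 3)) (Cst 0))
              (FOccursLater (Var 0) (tripleT (p1T arg) (tlT (Var 3)) (Var 4)) (Var 1)))
        (FAnd (FNe (hdT (Var 3)) (Cst 0))
           (FAnd (FOccursLater (Var 0)
                    (tripleT (Var 2) (consT (Monus (hdT (Var 3)) (Cst 1)) (tlT (Var 3))) (Var 5))
                    (Var 1))
                 (FOccursLater (Var 0)
                    (tripleT (p2T arg)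
                       (consT (Monus (hdT (Var 3)) (Cst 1)) (consT (Var 5) (tlT (Var 3))))
                       (Var 4))
                    (Var 1)))))).

Definition rule_mu_fm :=
  FAnd (FEq tag (Cst 5))
   (FAnd (FOccursLater (Var 0) (tripleT arg (consT (Var 4) (Var 3)) (Cst 0)) (Var 1))
         (FAllLt (Var 4) (FOccursLaterPos (Var 1) (p2T (Var 3)) (consT (Var 0) (Var 4)) (Var 2)))).

End RuleFormula.

Definition rule_ok_fm :=
  FOr rule_zero_fm (FOr rule_succ_fm (FOr rule_proj_fm
    (FOr rule_comp_fm (FOr rule_rec_fm rule_mu_fm)))).

Lemma sat_rule_ok_fm j d c v y aux :
  sat rule_ok_fm [j; d; c; v; y; aux] <->
  rule_ok c v y aux (fun J => occurs_later j J d) (fun f v => occurs_later_pos j f v d).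
Proof.
  unfold rule_ok_fm, rule_zero_fm, rule_succ_fm, rule_proj_fm, rule_comp_fm, rule_rec_fm,
    rule_mu_fm, rule_ok, FNe.
  cbn [sat]. sat_transcribe.
Qed.

Definition node_ok_fm :=
  let n := nthT (Var 0) (Var 1) in
  FCall rule_ok_fm [Var 0; Var 1; node_progT n; node_inputT n; node_outputT n; node_auxT n].

Lemma sat_node_ok_fm j d : sat node_ok_fm [j; d] <-> node_ok j d.
Proof.
  unfold node_ok_fm. rewrite sat_FCall. cbn [map].
  destruct (tval_node_fields (nthT (Var 0) (Var 1)) [j; d]) as (-> & -> & -> & ->).
  rewrite tval_nthT. apply sat_rule_ok_fm.
Qed.

Definition valid_fm :=
  FAnd (FNe (Var 0) (Cst 0))
       (FAllLt (Var 0) (FImpl (FTerm (skipT (Var 0) (Var 1))) (FCall node_ok_fm [Var 0; Var 1]))).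

Lemma sat_valid_fm d : sat valid_fm [d] <-> valid d.
Proof.
  unfold valid_fm, valid, FNe. cbn [sat]. apply iff_and; [reflexivity|].
  apply iff_all_lt; [reflexivity|]. intros i Hi. apply iff_imp.
  - now rewrite tval_skipT.
  - rewrite sat_FCall. apply sat_node_ok_fm.
Qed.

Definition derives_fm :=
  FAnd (FCall valid_fm [Var 0]) (FEq (p1T (hdT (Var 0))) (tripleT (Var 1) (Var 2) (Var 3))).

Lemma sat_derives_fm d c v y : sat derives_fm [d; c; v; y] <-> derives d c v y.
Proof.
  unfold derives_fm, derives. cbn [sat]. apply iff_and.
  - rewrite sat_FCall. apply sat_valid_fm.
  - now rewrite tval_p1T, tval_hdT, tval_tripleT.
Qed.

Definition some_node_from (L : list nat) (k : nat) (P : nat -> Prop) : Prop :=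
  exists j, k <= j /\ j < length L /\ P (nth j L 0).

Definition rule_ok_from (L : list nat) (k n : nat) : Prop :=
  rule_ok (node_prog n) (node_input n) (node_output n) (node_aux n)
    (fun J => some_node_from L k (asserts J)) (fun f v => some_node_from L k (succeeds f v)).

Definition valid_list (L : list nat) : Prop :=
  forall j, j < length L -> rule_ok_from L (S j) (nth j L 0).

Lemma some_node_from_mono L k k' (P Q : nat -> Prop) :
  k' <= k -> (forall n, P n -> Q n) -> some_node_from L k P -> some_node_from L k' Q.
Proof. intros Hk HPQ (j & ? & ? & ?). exists j. repeat split; auto; lia. Qed.

Lemma some_node_from_app_l L L' k P : some_node_from L k P -> some_node_from (L ++ L') k P.
Proof.
  intros (j & ? & ? & ?). exists j. rewrite length_app, app_nth1 by auto. repeat split; auto; lia.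
Qed.

Lemma some_node_from_app_r L L' k P :
  some_node_from L' k P -> some_node_from (L ++ L') (length L + k) P.
Proof.
  intros (j & ? & ? & ?). exists (length L + j).
  rewrite length_app, app_nth2_plus. repeat split; auto; lia.
Qed.

Lemma rule_ok_from_mono L L' k k' n :
  (forall P, some_node_from L k P -> some_node_from L' k' P) ->
  rule_ok_from L k n -> rule_ok_from L' k' n.
Proof. intros H. apply rule_ok_mono; auto. Qed.

Lemma some_node_from_code_list j L P :
  (exists j', j' < code_list L /\ (j < j' /\ (skip_code j' (code_list L) <> 0 /\
     P (nth_code j' (code_list L))))) <-> some_node_from L (S j) P.
Proof.
  pose proof (length_le_code_list L). split.
  - intros (j' & _ & ? & Hj' & HP). rewrite skip_code_neq0 in Hj'.
    rewrite nth_code_list in HP by auto. exists j'. repeat split; auto; lia.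
  - intros (j' & ? & ? & HP). exists j'. rewrite skip_code_neq0, nth_code_list by auto.
    repeat split; auto; lia.
Qed.

Lemma node_ok_code_list j L : j < length L ->
  node_ok j (code_list L) <-> rule_ok_from L (S j) (nth j L 0).
Proof.
  intros Hj. unfold node_ok, rule_ok_from. rewrite nth_code_list by auto.
  split; apply rule_ok_mono; intros; apply some_node_from_code_list; auto.
Qed.

Lemma valid_code_list L : valid (code_list L) <-> L <> [] /\ valid_list L.
Proof.
  unfold valid, valid_list. rewrite <- code_list_eq0. pose proof (length_le_code_list L) as HL.
  apply iff_and; [reflexivity|]. split.
  - intros H j Hj. apply node_ok_code_list, H; auto; [lia|]. now apply skip_code_neq0.
  - intros H j _ Hj. apply skip_code_neq0 in Hj. apply node_ok_code_list, H; auto.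
Qed.

Lemma asserts_triple c v y n :
  asserts (triple c v y) n -> node_prog n = c /\ node_input n = v /\ node_output n = y.
Proof.
  unfold asserts, triple, node_prog, node_input, node_output. intros ->.
  now rewrite !p1_pair, !p2_pair, !p1_pair.
Qed.

Lemma evalList_of_nth gs l ws : length gs = length ws ->
  (forall i, i < length gs -> eval (nth i gs PZero) l (nth i ws 0)) -> evalList gs l ws.
Proof.
  revert ws; induction gs; intros [|w ws] H1 H2; simpl in *; try lia; constructor.
  - apply (H2 0). lia.
  - apply IHgs; [lia|]. intros i Hi. apply (H2 (S i)). lia.
Qed.

Lemma length_eq_of_skip_code l l' :
  (forall i, i < code_list l + code_list l' + 1 ->
     (skip_code i (code_list l) <> 0 -> skip_code i (code_list l') <> 0) /\
     (skip_code i (code_list l') <> 0 -> skip_code i (code_list l) <> 0)) ->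
  length l = length l'.
Proof.
  intros H. pose proof (length_le_code_list l). pose proof (length_le_code_list l').
  destruct (Nat.lt_trichotomy (length l) (length l')) as [Hlt|[Heq|Hlt]]; auto; exfalso.
  - destruct (H (length l)) as [_ Hb]; [lia|]. rewrite !skip_code_neq0 in Hb. lia.
  - destruct (H (length l')) as [Hb _]; [lia|]. rewrite !skip_code_neq0 in Hb. lia.
Qed.

Section RuleSound.
Variables (lat : nat -> Prop) (latNZ : nat -> nat -> Prop).
Hypothesis lat_sound :
  forall t l y, lat (triple (code t) (code_list l) y) -> eval t l y.
Hypothesis latNZ_sound :
  forall t l, latNZ (code t) (code_list l) -> exists w, eval t l (S w).

Lemma rule_ok_comp_sound f gs l y aux :
  rule_ok (code (PComp f gs)) (code_list l) y aux lat latNZ -> eval (PComp f gs) l y.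
Proof.
  unfold rule_ok. cbn [code]. rewrite !p1_pair, !p2_pair.
  intros [[? _]|[[? _]|[[? _]|[(_ & Hf & Hlen & Hgs)|[[? _]|[? _]]]]]]; try discriminate.
  destruct (code_list_surj aux) as [ws <-].
  apply length_eq_of_skip_code in Hlen. rewrite length_map in Hlen.
  rewrite p1_pair in Hf. econstructor; [|apply lat_sound, Hf].
  apply evalList_of_nth; auto. intros i Hi.
  pose proof (length_le_code_list (map code gs)). rewrite length_map in *.
  specialize (Hgs i ltac:(lia)). rewrite skip_code_neq0, length_map, !nth_code_list in Hgs
    by (rewrite ?length_map; lia).
  apply lat_sound. replace (code (nth i gs PZero)) with (nth i (map code gs) 0); [now apply Hgs|].
  rewrite (nth_indep _ 0 (code PZero)), map_nth by (rewrite length_map; lia). reflexivity.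
Qed.

Lemma rule_ok_sound t l y aux :
  rule_ok (code t) (code_list l) y aux lat latNZ -> eval t l y.
Proof.
  destruct t as [| |i|f gs|f g|f]; [..|apply rule_ok_comp_sound| |];
    unfold rule_ok; cbn [code]; rewrite !p1_pair, ?p2_pair;
    intros [(? & H)|[(? & H)|[(? & H)|[(? & H)|[(? & H)|(? & H)]]]]]; try discriminate.
  - subst. constructor.
  - destruct l as [|x l]; [simpl in H; tauto|].
    destruct H as [_ ->]. rewrite hd_code_cons, Nat.add_1_r. constructor.
  - destruct H as [Hi ->]. rewrite skip_code_neq0 in Hi. rewrite nth_code_list by auto.
    now constructor.
  - destruct l as [|[|n] l]; [simpl in H; tauto| |];
      rewrite hd_code_cons, tl_code_cons in H; destruct H as (_ & [[Hn H]|(Hn & H1 & H2)]);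
      try lia.
    + constructor. rewrite p1_pair in H. now apply lat_sound.
    + replace (S n - 1) with n in * by lia. rewrite !cons_code_list in H1, H2.
      apply eRecS with (r := aux); apply lat_sound; assumption.
  - destruct H as [Hzero Hlt]. rewrite cons_code_list in Hzero.
    constructor; [now apply lat_sound|].
    intros z Hz. apply latNZ_sound. apply Hlt, Hz.
Qed.

End RuleSound.

(* Induction on the distance to the end of the list: premises occur later. *)
Lemma valid_list_sound L : valid_list L ->
  forall j, j < length L -> forall t l, node_prog (nth j L 0) = code t ->
    node_input (nth j L 0) = code_list l -> eval t l (node_output (nth j L 0)).
Proof.
  intros HV j.
  induction j as [j IH] using
    (well_founded_induction (Wf_nat.well_founded_ltof _ (fun j => length L - j))).
  unfold Wf_nat.ltof in IH.
  intros Hj t l Ht Hl. apply (rule_ok_sound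
    (fun J => some_node_from L (S j) (asserts J))
    (fun f v => some_node_from L (S j) (succeeds f v))) with (aux := node_aux (nth j L 0)).
  - intros t' l' y' (j' & ? & ? & H). apply asserts_triple in H as (? & ? & <-).
    apply IH; auto; lia.
  - intros t' l' (j' & ? & ? & ? & ? & Hy). destruct (node_output (nth j' L 0)) as [|w] eqn:E.
    + congruence.
    + exists w. rewrite <- E. apply IH; auto; lia.
  - rewrite <- Ht, <- Hl. apply HV, Hj.
Qed.

Lemma derives_sound d t l y : derives d (code t) (code_list l) y -> eval t l y.
Proof.
  intros [HV Hr]. destruct (code_list_surj d) as [L <-].
  apply valid_code_list in HV as [Hne HV].
  destruct L as [|n L]; [congruence|]. rewrite hd_code_cons in Hr.
  apply asserts_triple in Hr as (Hc & Hv & <-).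
  apply (valid_list_sound _ HV 0); simpl; auto; lia.
Qed.

(* The generated [Scheme] would give no induction hypothesis for the
   computations hidden under the existential of [eMu]. *)
Section EvalInd.
Variable P : PR -> list nat -> nat -> Prop.
Variable Q : list PR -> list nat -> list nat -> Prop.
Hypothesis hZero : forall v, P PZero v 0.
Hypothesis hSucc : forall x v, P PSucc (x :: v) (S x).
Hypothesis hProj : forall i v, i < length v -> P (PProj i) v (nth i v 0).
Hypothesis hComp : forall f gs v ws y,
  evalList gs v ws -> Q gs v ws -> eval f ws y -> P f ws y -> P (PComp f gs) v y.
Hypothesis hRec0 : forall f g v y, eval f v y -> P f v y -> P (PRec f g) (0 :: v) y.
Hypothesis hRecS : forall f g n v r y,
  eval (PRec f g) (n :: v) r -> P (PRec f g) (n :: v) r ->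
  eval g (n :: r :: v) y -> P g (n :: r :: v) y -> P (PRec f g) (S n :: v) y.
Hypothesis hMu : forall f v y, eval f (y :: v) 0 -> P f (y :: v) 0 ->
  (forall z, z < y -> exists w, eval f (z :: v) (S w) /\ P f (z :: v) (S w)) -> P (PMu f) v y.
Hypothesis hNil : forall v, Q [] v [].
Hypothesis hCons : forall g gs v w ws,
  eval g v w -> P g v w -> evalList gs v ws -> Q gs v ws -> Q (g :: gs) v (w :: ws).

Fixpoint eval_ind2 c v y (H : eval c v y) {struct H} : P c v y :=
  match H in eval c v y return P c v y with
  | eZero v => hZero v
  | eSucc x v => hSucc x v
  | eProj i v Hi => hProj i v Hi
  | eComp f gs v ws y HL Hf =>
      hComp f gs v ws y HL (evalList_ind2 gs v ws HL) Hf (eval_ind2 f ws y Hf)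
  | eRec0 f g v y Hf => hRec0 f g v y Hf (eval_ind2 _ _ _ Hf)
  | eRecS f g n v r y H1 H2 =>
      hRecS f g n v r y H1 (eval_ind2 _ _ _ H1) H2 (eval_ind2 _ _ _ H2)
  | eMu f v y H0 H1 => hMu f v y H0 (eval_ind2 _ _ _ H0)
      (fun z Hz => match H1 z Hz with
                   | ex_intro _ w Hw => ex_intro _ w (conj Hw (eval_ind2 _ _ _ Hw))
                   end)
  end
with evalList_ind2 gs v ws (H : evalList gs v ws) {struct H} : Q gs v ws :=
  match H in evalList gs v ws return Q gs v ws with
  | eLnil v => hNil v
  | eLcons g gs v w ws Hg Hgs =>
      hCons g gs v w ws Hg (eval_ind2 _ _ _ Hg) Hgs (evalList_ind2 _ _ _ Hgs)
  end.
End EvalInd.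

Lemma eval_det : forall c v y, eval c v y -> forall y', eval c v y' -> y = y'.
Proof.
  apply (eval_ind2 (fun c v y => forall y', eval c v y' -> y = y')
                   (fun gs v ws => forall ws', evalList gs v ws' -> ws = ws')).
  - intros v y' H; inversion H; auto.
  - intros x v y' H; inversion H; auto.
  - intros i v _ y' H; inversion H; auto.
  - intros f gs v ws y _ IHl _ IHf y' H. inversion H; subst.
    match goal with Hl : evalList gs v ?ws' |- _ => apply IHl in Hl end. subst. auto.
  - intros f g v y _ IH y' H. inversion H; subst. auto.
  - intros f g n v r y _ IH1 _ IH2 y' H. inversion H; subst.
    match goal with Hl : eval (PRec f g) (n :: v) ?r' |- _ => apply IH1 in Hl end. subst. auto.
  - intros f v y _ IH0 Hz y' H. inversion H; subst.
    destruct (Nat.lt_trichotomy y y') as [Hl|[Hl|Hl]]; auto; exfalso.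
    + match goal with H3 : forall z, z < y' -> _ |- _ => destruct (H3 y Hl) as [w Hw] end.
      apply IH0 in Hw. discriminate.
    + destruct (Hz y' Hl) as (w & _ & Hw).
      match goal with H2 : eval f (y' :: v) 0 |- _ => apply Hw in H2 end. discriminate.
  - intros v ws' H; inversion H; auto.
  - intros g gs v w ws _ IHg _ IHgs ws' H. inversion H; subst. f_equal; auto.
Qed.

Definition node c v y aux := pair (triple c v y) aux.

Lemma node_fields c v y aux :
  node_prog (node c v y aux) = c /\ node_input (node c v y aux) = v /\
  node_output (node c v y aux) = y /\ node_aux (node c v y aux) = aux.
Proof.
  unfold node, node_prog, node_input, node_output, node_aux, triple.
  now rewrite ?p1_pair, ?p2_pair, ?p1_pair.
Qed.

Lemma valid_list_app L L' : valid_list L -> valid_list L' -> valid_list (L ++ L').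
Proof.
  intros H H' j Hj. rewrite length_app in Hj.
  destruct (Nat.lt_ge_cases j (length L)) as [Hlt|Hge].
  - rewrite app_nth1 by auto. eapply rule_ok_from_mono; [|apply H, Hlt].
    apply some_node_from_app_l.
  - destruct (Nat.le_exists_sub _ _ Hge) as (j0 & -> & _).
    rewrite Nat.add_comm, app_nth2_plus.
    eapply rule_ok_from_mono; [|apply H'; lia].
    intros P HP. apply (some_node_from_app_r L) in HP.
    eapply some_node_from_mono; [| |exact HP]; auto; lia.
Qed.

Lemma valid_list_cons n L : valid_list L -> rule_ok_from L 0 n -> valid_list (n :: L).
Proof.
  intros HL Hn [|j] Hj; cbn [nth].
  - eapply rule_ok_from_mono; [|exact Hn].
    intros P HP. apply (some_node_from_app_r [n]) in HP. exact HP.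
  - eapply rule_ok_from_mono; [|apply HL; simpl in Hj; lia].
    intros P HP. apply (some_node_from_app_r [n]) in HP. exact HP.
Qed.

Lemma some_node_from_app_r0 L L' P : some_node_from L' 0 P -> some_node_from (L ++ L') 0 P.
Proof.
  intros HP. apply (some_node_from_app_r L) in HP.
  eapply some_node_from_mono; [| |exact HP]; auto; lia.
Qed.

Definition provides (L : list nat) (J : nat) : Prop := some_node_from L 0 (asserts J).

Definition derivable (c v y : nat) : Prop :=
  exists n L, valid_list (n :: L) /\ asserts (triple c v y) n.

Lemma derivable_provides c v y :
  derivable c v y -> exists L, valid_list L /\ provides L (triple c v y).
Proof.
  intros (n & L & HV & Hn). exists (n :: L). split; auto. exists 0. simpl. auto with arith.
Qed.

Lemma derivable_by_rule c v y aux L : valid_list L ->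
  rule_ok c v y aux (provides L) (fun f v => some_node_from L 0 (succeeds f v)) ->
  derivable c v y.
Proof.
  intros HL Hr. exists (node c v y aux), L. split.
  - apply valid_list_cons; auto. unfold rule_ok_from.
    now destruct (node_fields c v y aux) as (-> & -> & -> & ->).
  - unfold asserts, node. apply p1_pair.
Qed.

Lemma derivable_axiom c v y :
  rule_ok c v y 0 (fun _ => False) (fun _ _ => False) -> derivable c v y.
Proof.
  intros Hr. apply (derivable_by_rule c v y 0 []); [intros j Hj; simpl in Hj; lia|].
  revert Hr. apply rule_ok_mono; contradiction.
Qed.

Lemma derivable_comp f gs l ws y L :
  valid_list L -> length gs = length ws ->
  (forall i, i < length gs ->
     provides L (triple (code (nth i gs PZero)) (code_list l) (nth i ws 0))) ->
  derivable (code f) (code_list ws) y -> derivable (code (PComp f gs)) (code_list l) y.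
Proof.
  intros HL Hlen Hgs Hf. apply derivable_provides in Hf as (Lf & HLf & Hf).
  apply (derivable_by_rule _ _ _ (code_list ws) (Lf ++ L)); [now apply valid_list_app|].
  do 3 right; left. cbn [code]. rewrite !p1_pair, !p2_pair, p1_pair.
  split; [reflexivity|]. split; [now apply some_node_from_app_l|]. split.
  - intros i _. rewrite !skip_code_neq0, length_map. lia.
  - intros i _ Hi. rewrite skip_code_neq0, length_map in Hi.
    rewrite !nth_code_list by (rewrite ?length_map; lia).
    apply some_node_from_app_r0.
    rewrite (nth_indep _ 0 (code PZero)), map_nth by (rewrite length_map; auto). now apply Hgs.
Qed.

Lemma derivable_rec0 f g l y :
  derivable (code f) (code_list l) y -> derivable (code (PRec f g)) (code_list (0 :: l)) y.
Proof.
  intros Hf. apply derivable_provides in Hf as (L & HL & Hf).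
  apply (derivable_by_rule _ _ _ 0 L HL). do 4 right; left. cbn [code].
  rewrite p1_pair, p2_pair, p1_pair, hd_code_cons, tl_code_cons.
  split; [reflexivity|]. split; [discriminate|]. left. auto.
Qed.

Lemma derivable_recS f g n l r y :
  derivable (code (PRec f g)) (code_list (n :: l)) r ->
  derivable (code g) (code_list (n :: r :: l)) y ->
  derivable (code (PRec f g)) (code_list (S n :: l)) y.
Proof.
  intros Hr Hg. apply derivable_provides in Hr as (L1 & HL1 & Hr).
  apply derivable_provides in Hg as (L2 & HL2 & Hg).
  apply (derivable_by_rule _ _ _ r (L1 ++ L2)); [now apply valid_list_app|].
  do 4 right; left. cbn [code]. rewrite !p1_pair, !p2_pair, hd_code_cons, tl_code_cons.
  split; [reflexivity|]. split; [discriminate|]. right. split; [lia|].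
  replace (S n - 1) with n by lia. rewrite !cons_code_list. split.
  - now apply some_node_from_app_l.
  - now apply some_node_from_app_r0.
Qed.

Lemma derivable_mu f l y :
  derivable (code f) (code_list (y :: l)) 0 ->
  (forall z, z < y -> exists w, derivable (code f) (code_list (z :: l)) (S w)) ->
  derivable (code (PMu f)) (code_list l) y.
Proof.
  intros H0 Hz. apply derivable_provides in H0 as (L0 & HL0 & H0).
  assert (Hpos : forall y', y' <= y -> exists L, valid_list L /\
    forall z, z < y' -> some_node_from L 0 (succeeds (code f) (code_list (z :: l)))).
  { induction y' as [|y' IH]; intros Hy'.
    - exists []. split; [intros j Hj; simpl in Hj; lia|intros; lia].
    - destruct IH as (L & HL & HLz); [lia|].
      destruct (Hz y') as (w & n & L' & HL' & Hn); [lia|].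
      exists (L ++ n :: L'). split; [now apply valid_list_app|].
      intros z Hzy. destruct (Nat.eq_dec z y') as [->|].
      + apply some_node_from_app_r0. exists 0.
        apply asserts_triple in Hn as (Hc & Hv & Hout). unfold succeeds. simpl.
        rewrite Hc, Hv, Hout. repeat split; auto with arith.
      + apply some_node_from_app_l, HLz. lia. }
  destruct (Hpos y (le_n y)) as (L & HL & HLz).
  apply (derivable_by_rule _ _ _ 0 (L0 ++ L)); [now apply valid_list_app|].
  do 5 right. cbn [code]. rewrite p1_pair, p2_pair. split; [reflexivity|]. split.
  - now apply some_node_from_app_l.
  - intros z Hzy. now apply some_node_from_app_r0, HLz.
Qed.

Lemma eval_derivable : forall t l y, eval t l y -> derivable (code t) (code_list l) y.
Proof.
  apply (eval_ind2 (fun t l y => derivable (code t) (code_list l) y)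
    (fun gs l ws => exists L, valid_list L /\ forall i, i < length gs ->
       provides L (triple (code (nth i gs PZero)) (code_list l) (nth i ws 0)))).
  - intros v. apply derivable_axiom. left. cbn [code]. now rewrite p1_pair.
  - intros x v. apply derivable_axiom. right; left. cbn [code].
    rewrite p1_pair, hd_code_cons. simpl. lia.
  - intros i v Hi. apply derivable_axiom. do 2 right; left. cbn [code].
    now rewrite p1_pair, p2_pair, skip_code_neq0, nth_code_list.
  - intros f gs v ws y HL (L & HV & Hgs) _ Hf.
    apply (derivable_comp _ _ _ ws _ L); auto.
    clear -HL. induction HL; simpl; auto.
  - intros f g v y _ Hf. now apply derivable_rec0.
  - intros f g n v r y _ Hr _ Hg. now apply (derivable_recS _ _ _ _ r).
  - intros f v y _ H0 Hz. apply derivable_mu; auto.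
    intros z Hzy. destruct (Hz z Hzy) as (w & _ & Hw). eauto.
  - intros v. exists []. split; [intros j Hj; simpl in Hj; lia|intros i Hi; simpl in Hi; lia].
  - intros g gs v w ws _ Hg _ (L & HL & Hgs).
    apply derivable_provides in Hg as (L' & HL' & Hg).
    exists (L' ++ L). split; [now apply valid_list_app|].
    intros [|i] Hi; simpl.
    + now apply some_node_from_app_l.
    + apply some_node_from_app_r0, Hgs. simpl in Hi; lia.
Qed.

Lemma derives_complete t l y : eval t l y -> exists d, derives d (code t) (code_list l) y.
Proof.
  intros H. destruct (eval_derivable t l y H) as (n & L & HV & Hn).
  exists (code_list (n :: L)). split.
  - apply valid_code_list. split; [discriminate|auto].
  - now rewrite hd_code_cons.
Qed.

(** * Normal forms of arithmetical relations *)

(* [alt m Q v] is [exists y1, ~ exists y2, ~ ... Q (ym :: ... :: y1 :: v)]. *)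
Fixpoint alt (m : nat) (Q : list nat -> Prop) (v : list nat) : Prop :=
  match m with 0 => Q v | S m' => exists y, ~ alt m' Q (y :: v) end.

Lemma alt_ext m : forall Q1 Q2 a b,
  (forall ys, length ys = m -> (Q1 (ys ++ a) <-> Q2 (ys ++ b))) -> (alt m Q1 a <-> alt m Q2 b).
Proof.
  induction m; intros Q1 Q2 a b H; simpl.
  - apply (H []). reflexivity.
  - apply iff_ex. intros y. apply iff_not. apply IHm. intros ys Hys.
    specialize (H (ys ++ [y])). rewrite <- !app_assoc in H. apply H.
    rewrite length_app; simpl; lia.
Qed.

Lemma alt_const m : forall Q a (P : Prop),
  (forall ys, length ys = m -> (Q (ys ++ a) <-> P)) ->
  (alt m Q a <-> (if Nat.even m then P else ~ P)).
Proof.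
  induction m; intros Q a P H; cbn [alt].
  - apply (H []). reflexivity.
  - assert (Hy : forall y, alt m Q (y :: a) <-> (if Nat.even m then P else ~ P)).
    { intros y. apply IHm. intros ys Hys. specialize (H (ys ++ [y])).
      rewrite <- app_assoc in H. apply H. rewrite length_app; simpl; lia. }
    rewrite Nat.even_succ, <- Nat.negb_even.
    destruct (Nat.even m); simpl; setoid_rewrite Hy; split; try (intros [_ ?]; tauto);
      intros; exists 0; tauto.
Qed.

Lemma alt_case m Q Q' a b (G P : Prop) :
  (forall ys, length ys = m ->
     (Q (ys ++ a) <-> (G /\ Q' (ys ++ b)) \/ (~ G /\ if Nat.even m then P else ~ P))) ->
  (alt m Q a <-> (G /\ alt m Q' b) \/ (~ G /\ P)).
Proof.
  intros H. destruct (classic G) as [HG|HG].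
  - rewrite (alt_ext m Q Q' a b); [tauto|]. intros ys Hys. rewrite H by auto. tauto.
  - rewrite (alt_const m Q a (if Nat.even m then P else ~ P)).
    + destruct (Nat.even m); tauto.
    + intros ys Hys. rewrite H by auto. tauto.
Qed.

Lemma alt_split m : forall Q v, alt (S m) Q v <-> alt m (alt 1 Q) v.
Proof.
  induction m; intros Q v; [reflexivity|].
  change (alt (S (S m)) Q v) with (exists y, ~ alt (S m) Q (y :: v)).
  change (alt (S m) (alt 1 Q) v) with (exists y, ~ alt m (alt 1 Q) (y :: v)).
  apply iff_ex; intro y. apply iff_not. apply IHm.
Qed.

Lemma Sigma_ext n k (R R' : list nat -> Prop) :
  (forall v, length v = k -> (R v <-> R' v)) -> Sigma n k R -> Sigma n k R'.
Proof.
  intros H. destruct n; simpl.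
  - intros (c & Hc). exists c. intros v Hv. rewrite <- H by auto. auto.
  - intros (T & HT & H2). exists T. split; auto. intros v Hv. rewrite <- H by auto. auto.
Qed.

Lemma Sigma_alt m : forall k Q, computable_rel (m + k) Q -> Sigma m k (alt m Q).
Proof.
  induction m; intros k Q HQ; simpl; [exact HQ|].
  exists (fun w => ~ alt m Q w). split.
  - apply (Sigma_ext m (S k) (alt m Q)).
    + intros v _. split; [auto|apply NNPP].
    + apply IHm. now rewrite Nat.add_succ_r.
  - intros v _. reflexivity.
Qed.

Lemma alt_of_Sigma m : forall k R, Sigma m k R ->
  exists Q, computable_rel (m + k) Q /\ forall v, length v = k -> (R v <-> alt m Q v).
Proof.
  induction m; intros k R HS; simpl in *.
  - exists R. split; auto. reflexivity.
  - destruct HS as (T & HT & HR). destruct (IHm (S k) _ HT) as (Q & HQ & HQe).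
    exists Q. split; [now rewrite <- Nat.add_succ_r|].
    intros v Hv. rewrite HR by auto. apply iff_ex. intros y.
    rewrite <- HQe by (simpl; lia). split; [auto|apply NNPP].
Qed.

Lemma map_tval_vars ys v zs :
  map (fun a => tval a (ys ++ v ++ zs)) (map Var (seq (length ys) (length v))) = v.
Proof.
  revert ys. induction v as [|x v IH]; intros ys; [reflexivity|]. cbn [length seq map tval app].
  rewrite nth_middle. f_equal. specialize (IH (ys ++ [x])).
  rewrite length_app, <- app_assoc, Nat.add_1_r in IH. exact IH.
Qed.

(* On environments [z :: u ++ [e]] with [length u = k]: [z] does not code a
   pair of an input [x] and of a derivation of the computation of the
   program [e] on [x :: u] with output 0. *)
Definition univ_matrix (k : nat) : formula :=
  FNot (FCall derives_fm
    [p2T (Var 0); Var (S k); code_listT (p1T (Var 0) :: map Var (seq 1 k)); Cst 0]).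

Lemma sat_univ_matrix z u e :
  sat (univ_matrix (length u)) (z :: u ++ [e]) <->
  ~ derives (p2 z) e (code_list (p1 z :: u)) 0.
Proof.
  unfold univ_matrix. cbn [sat]. rewrite sat_FCall. cbn [map].
  rewrite sat_derives_fm, tval_p2T, tval_code_listT. cbn [map tval].
  rewrite tval_p1T. cbn [tval nth].
  pose proof (map_tval_vars [z] u [e]) as Hu. cbn [length app] in Hu. rewrite Hu.
  rewrite app_nth2, Nat.sub_diag by lia. reflexivity.
Qed.

Lemma univ_matrix_correct c (B : list nat -> Prop) u :
  (forall v, length v = S (length u) -> (B v -> eval c v 1) /\ (~ B v -> eval c v 0)) ->
  (exists z, ~ sat (univ_matrix (length u)) (z :: u ++ [code c])) <-> (exists z, ~ B (z :: u)).
Proof.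
  intros HB. split.
  - intros [z Hz]. rewrite sat_univ_matrix in Hz. apply NNPP, derives_sound in Hz.
    exists (p1 z). intros Hb. apply HB in Hb; [|reflexivity].
    pose proof (eval_det _ _ _ Hz _ Hb). discriminate.
  - intros [x Hx]. apply HB in Hx; [|reflexivity].
    destruct (derives_complete _ _ _ Hx) as [d Hd].
    exists (pair x d). rewrite sat_univ_matrix, p1_pair, p2_pair. tauto.
Qed.

Lemma alt_univ m c (B : list nat -> Prop) :
  (forall v, length v = m + 3 -> (B v -> eval c v 1) /\ (~ B v -> eval c v 0)) ->
  forall x y, alt (S m) B [x; y] <-> alt (S m) (sat (univ_matrix (m + 2))) [x; y; code c].
Proof.
  intros HB x y. rewrite !alt_split. apply alt_ext. intros ys Hys. cbn [alt].
  replace (m + 2) with (length (ys ++ [x; y])) by (rewrite length_app; simpl; lia).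
  replace (ys ++ [x; y; code c]) with ((ys ++ [x; y]) ++ [code c]) by now rewrite <- app_assoc.
  symmetry. apply univ_matrix_correct. intros v Hv. apply HB.
  rewrite Hv, length_app. simpl. lia.
Qed.

Lemma alt_bounded_ex m k (A C Df : formula) (N : term) (args : list term) :
  exists Q, computable_rel (m + k) Q /\ forall v, length v = k ->
    (alt m Q v <-> sat A v \/ exists j, j < tval N v /\ sat C (j :: v) /\
       alt m (sat Df) (map (fun a => tval a (j :: v)) args)).
Proof.
  destruct m as [|m].
  { exists (sat (FOr A (FExLt N (FAnd C (FCall Df args))))). split; [apply computable_sat|].
    intros v Hv. cbn [alt sat]. apply iff_or; [reflexivity|].
    apply iff_ex. intros j. now rewrite sat_FCall. }
  (* On [ys ++ p :: v], the components of [p] are the index [j] and the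
     first quantified variable of the [Sigma] formula. *)
  set (vs := map Var (seq (S m) k)).
  set (p := Var m).
  set (guard := FAnd (FNot (FCall A vs)) (FAnd (FLt (p1T p) (App N vs)) (FCall C (p1T p :: vs)))).
  set (body := FCall Df (map Var (seq 0 m) ++ p2T p :: map (fun a => App a (p1T p :: vs)) args)).
  set (otherwise := if Nat.even m then FNot (FCall A vs) else FNot (FNot (FCall A vs))).
  set (Q := FOr (FAnd guard body) (FAnd (FNot guard) otherwise)).
  exists (sat Q). split; [apply computable_sat|]. intros v Hv.
  set (G j := ~ sat A v /\ j < tval N v /\ sat C (j :: v)).
  set (args_at j := map (fun a => tval a (j :: v)) args).
  assert (Hinner : forall q, alt m (sat Q) (q :: v) <->
    (G (p1 q) /\ alt m (sat Df) (p2 q :: args_at (p1 q))) \/ (~ G (p1 q) /\ ~ sat A v)).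
  { intros q. apply alt_case. intros ys Hys.
    assert (Hvs : map (fun a => tval a (ys ++ q :: v)) vs = v).
    { pose proof (map_tval_vars (ys ++ [q]) v []) as E.
      rewrite length_app, Hys, Nat.add_1_r, app_nil_r, <- app_assoc, Hv in E. exact E. }
    assert (Hp : tval p (ys ++ q :: v) = q) by (cbn; rewrite <- Hys; apply nth_middle).
    assert (Hys' : map (fun a => tval a (ys ++ q :: v)) (map Var (seq 0 m)) = ys).
    { pose proof (map_tval_vars [] ys (q :: v)) as E. now rewrite Hys in E. }
    unfold Q, guard, body, otherwise. cbn [sat]. rewrite !sat_FCall, map_app, Hys'.
    cbn [map tval]. rewrite map_map. cbn [tval map].
    rewrite !tval_p1T, !tval_p2T, !Hp, !Hvs.
    destruct (Nat.even m); cbn [sat]; rewrite ?sat_FCall, ?Hvs; reflexivity. }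
  cbn [alt]. setoid_rewrite Hinner. unfold G. split.
  - intros [q Hq]. destruct (classic (sat A v)) as [HA|HA]; [now left|right].
    exists (p1 q). apply not_or_and in Hq as [Hq1 Hq2].
    assert (Hg : G (p1 q)) by (apply NNPP; tauto). destruct Hg as (_ & Hj & HC).
    repeat split; auto. exists (p2 q). tauto.
  - intros [HA|(j & Hj & HC & [z Hz])].
    + exists 0. tauto.
    + exists (pair j z). rewrite p1_pair, p2_pair. unfold args_at. tauto.
Qed.

(** * Chains of witnessed edges *)

Definition src tr := p1 (p2 tr).
Definition dst tr := p2 (p2 tr).

(* [chain a L b]: the triples [pair w (pair x y)] of [L] are the edges, used in
   either direction, of a walk from [a] to [b]; [w] is a witness for the edge. *)
Fixpoint chain (a : nat) (L : list nat) (b : nat) : Prop :=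
  match L with
  | [] => a = b
  | tr :: L' => (a = src tr /\ chain (dst tr) L' b) \/ (a = dst tr /\ chain (src tr) L' b)
  end.

Lemma chain_app a L1 L2 c : chain a (L1 ++ L2) c <-> exists b, chain a L1 b /\ chain b L2 c.
Proof.
  revert a; induction L1; intros a0; simpl.
  - split; [eauto|]. intros (b & -> & H); auto.
  - rewrite !IHL1. split.
    + intros [(-> & b & H1 & H2)|(-> & b & H1 & H2)]; exists b; auto.
    + intros (b & [(-> & H1)|(-> & H1)] & H2); [left|right]; split; eauto.
Qed.

Lemma chain_rev a L b : chain a L b -> chain b (rev L) a.
Proof.
  revert a; induction L; intros a0 H; simpl in *; auto.
  apply chain_app. destruct H as [(-> & H)|(-> & H)].
  - exists (dst a). split; auto. simpl. auto.
  - exists (src a). split; auto. simpl. auto.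
Qed.

Section Chains.
Variables (E : nat -> Prop).

Definition chain_rel (a b : nat) : Prop := exists L, chain a L b /\ Forall E L.

Lemma chain_rel_refl a : chain_rel a a.
Proof. exists []. simpl. auto. Qed.

Lemma chain_rel_sym a b : chain_rel a b -> chain_rel b a.
Proof.
  intros (L & H1 & H2). exists (rev L). split; [now apply chain_rev|].
  now apply Forall_rev.
Qed.

Lemma chain_rel_trans a b c : chain_rel a b -> chain_rel b c -> chain_rel a c.
Proof.
  intros (L1 & H1 & H2) (L2 & H3 & H4). exists (L1 ++ L2).
  split; [apply chain_app; eauto|now apply Forall_app].
Qed.

Lemma chain_rel_closed (F : nat -> nat -> Prop) : equivalence_rel F ->
  (forall tr, E tr -> F (src tr) (dst tr)) -> forall a b, chain_rel a b -> F a b.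
Proof.
  intros (Fr & Fs & Ft) HE a b (L & HL & HLE). revert a HL.
  induction HLE as [|tr L Htr _ IH]; intros a HL; simpl in HL.
  - subst. apply Fr.
  - destruct HL as [(-> & HL)|(-> & HL)]; eapply Ft; eauto.
Qed.

End Chains.

(** * The graph *)

(* Vertices [0, 1, 2, 3] form a path, which realises the diameter 3; a vertex
   [vertex e a b s] stands for a chain [decode s] from [a] to [b] of
   [W_e]-edges, where [W_e] is the [e]-th [Sigma^0_(m+1)] relation. *)
Definition vertex e a b s := 4 + pair e (pair a (pair b s)).
Definition index_of u := p1 (u - 4).
Definition start_of u := p1 (p2 (u - 4)).
Definition end_of u := p1 (p2 (p2 (u - 4))).
Definition chain_of u := p2 (p2 (p2 (u - 4))).

Lemma vertex_fields e a b s :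
  index_of (vertex e a b s) = e /\ start_of (vertex e a b s) = a /\
  end_of (vertex e a b s) = b /\ chain_of (vertex e a b s) = s.
Proof.
  unfold vertex, index_of, start_of, end_of, chain_of.
  replace (4 + _ - 4) with (pair e (pair a (pair b s))) by lia.
  now rewrite ?p1_pair, ?p2_pair, ?p1_pair, ?p2_pair, ?p1_pair.
Qed.

Lemma vertex_inj e a b s e' a' b' s' :
  vertex e a b s = vertex e' a' b' s' -> e = e' /\ a = a' /\ b = b' /\ s = s'.
Proof.
  intros H. destruct (vertex_fields e a b s) as (E1 & E2 & E3 & E4).
  destruct (vertex_fields e' a' b' s') as (E1' & E2' & E3' & E4').
  rewrite H in E1, E2, E3, E4. repeat split; congruence.
Qed.

Definition gadget_edge u u' := (u < 4 /\ u' < 4) /\ (u' = S u \/ u = S u').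

Definition share_end u u' :=
  start_of u = start_of u' \/ start_of u = end_of u' \/
  end_of u = start_of u' \/ end_of u = end_of u'.

Section UniversalGraph.
Variable m : nat.

(* [W_e x y] is [alt (S m) Umat [x; y; e]], i.e. some [w] has
   [witnessed e (pair w (pair x y))]. *)
Definition Umat := sat (univ_matrix (m + 2)).
Definition witnessed e tr : Prop := ~ alt m Umat [p1 tr; src tr; dst tr; e].

Definition valid_vertex u :=
  4 <= u /\ chain (start_of u) (decode (chain_of u)) (end_of u) /\
  Forall (witnessed (index_of u)) (decode (chain_of u)).

Definition UG u u' := gadget_edge u u' \/
  (u <> u' /\ valid_vertex u /\ valid_vertex u' /\ index_of u = index_of u' /\ share_end u u').

Definition same_comp u u' := u = u' \/ (u < 4 /\ u' < 4) \/
  (valid_vertex u /\ valid_vertex u' /\ index_of u = index_of u' /\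
   chain_rel (witnessed (index_of u)) (start_of u) (start_of u')).

Lemma UG_sym u u' : UG u u' -> UG u' u.
Proof.
  unfold UG, gadget_edge, share_end. intros [H|(? & ? & ? & ? & H)]; [left; lia|right].
  split; [congruence|]. do 2 (split; [auto|]). split; [congruence|].
  destruct H as [?|[?|[?|?]]]; [left|right; right; left|right; left|do 3 right]; congruence.
Qed.

Lemma UG_simple : simple_graph UG.
Proof.
  split; [|apply UG_sym]. unfold UG, gadget_edge. intros u [H|H]; [lia|tauto].
Qed.

Lemma valid_vertex_chain_rel u :
  valid_vertex u -> chain_rel (witnessed (index_of u)) (start_of u) (end_of u).
Proof. intros (_ & H1 & H2). exists (decode (chain_of u)). auto. Qed.

Lemma UG_same_comp u u' : UG u u' -> same_comp u u'.
Proof.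
  unfold UG, same_comp. intros [H|(H1 & H2 & H3 & H4 & H5)]; [unfold gadget_edge in H; tauto|].
  do 2 right. do 3 (split; [auto|]).
  pose proof (valid_vertex_chain_rel u H2) as R1.
  pose proof (valid_vertex_chain_rel u' H3) as R2. rewrite <- H4 in R2.
  destruct H5 as [E|[E|[E|E]]]; rewrite ?E in R1 |- *.
  - apply chain_rel_refl.
  - now apply chain_rel_sym.
  - rewrite <- E. exact R1.
  - eapply chain_rel_trans; [exact R1|]. rewrite E. now apply chain_rel_sym.
Qed.

Lemma same_comp_trans u v w : same_comp u v -> same_comp v w -> same_comp u w.
Proof.
  unfold same_comp. intros H [<-|[HB|(H1' & H2' & H3' & H4')]]; [exact H| |].
  - destruct H as [->|[HA|(H1 & H2 & _)]]; [tauto|tauto|destruct H2; lia].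
  - destruct H as [->|[HA|(H1 & H2 & H3 & H4)]]; [tauto|destruct H1'; lia|].
    do 2 right. do 2 (split; [auto|]). split; [congruence|].
    rewrite <- H3 in H4'. eapply chain_rel_trans; eauto.
Qed.

Lemma walk_same_comp n u u' : walk UG n u u' -> same_comp u u'.
Proof.
  induction 1; [now left|]. eapply same_comp_trans; eauto. now apply UG_same_comp.
Qed.

Lemma walk_app n1 n2 a b c : walk UG n1 a b -> walk UG n2 b c -> walk UG (n1 + n2) a c.
Proof. induction 1; intros; simpl; auto. econstructor; eauto. Qed.

Lemma walk_rev n a b : walk UG n a b -> walk UG n b a.
Proof.
  induction 1 as [|n a b c Hab _ IH]; [constructor|].
  rewrite <- Nat.add_1_r. apply (walk_app _ _ _ b); [exact IH|].
  apply (walkS _ 0 b a a); [apply UG_sym, Hab|constructor].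
Qed.

Lemma walk1 a b : UG a b -> walk UG 1 a b.
Proof. intros. econstructor; eauto. constructor. Qed.

Lemma gadget_walk u u' : u < 4 -> u' < 4 -> exists n, n <= 3 /\ walk UG n u u'.
Proof.
  assert (Hstep : forall a, a < 3 -> walk UG 1 a (S a))
    by (intros; apply walk1; left; unfold gadget_edge; lia).
  assert (Hup : forall a d, a + d < 4 -> walk UG d a (a + d)).
  { intros a d. revert a. induction d; intros a Had; [rewrite Nat.add_0_r; constructor|].
    replace (a + S d) with (S a + d) by lia.
    apply (walk_app 1 d _ (S a)); [apply Hstep|apply IHd]; lia. }
  intros Hu Hu'. destruct (Nat.le_ge_cases u u') as [Hle|Hle];
    destruct (Nat.le_exists_sub _ _ Hle) as (d & -> & _); exists d; split; try lia.
  - rewrite Nat.add_comm. apply Hup. lia.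
  - apply walk_rev. rewrite Nat.add_comm. apply Hup. lia.
Qed.

(* Two valid vertices with [chain_rel] related starts are joined through the
   vertex of a chain between the two starts. *)
Lemma same_comp_walk u u' : same_comp u u' -> exists n, n <= 3 /\ walk UG n u u'.
Proof.
  intros [->|[[Hu Hu']|(Hu & Hu' & He & L & HL & HLw)]].
  - exists 0. split; [lia|constructor].
  - now apply gadget_walk.
  - destruct (Nat.eq_dec u u') as [->|Hne]; [exists 0; split; [lia|constructor]|].
    destruct (classic (share_end u u')) as [Hsh|Hsh].
    { exists 1. split; [lia|]. apply walk1. right. auto. }
    destruct (vertex_fields (index_of u) (start_of u) (start_of u') (code_list L))
      as (F1 & F2 & F3 & F4).
    remember (vertex (index_of u) (start_of u) (start_of u') (code_list L)) as w eqn:Ew.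
    assert (Hw : valid_vertex w).
    { split; [rewrite Ew; unfold vertex; lia|]. now rewrite F1, F2, F3, F4, decode_code_list. }
    assert (Hwu : w <> u) by (intros E; apply Hsh; unfold share_end; rewrite <- E, F3; tauto).
    assert (Hwu' : w <> u') by (intros E; apply Hsh; unfold share_end; rewrite <- E, F2; tauto).
    exists 2. split; [lia|]. apply (walk_app 1 1 u w u'); apply walk1; right.
    + split; [congruence|]. do 2 (split; [auto|]). split; [congruence|].
      unfold share_end. rewrite F2. tauto.
    + split; [congruence|]. do 2 (split; [auto|]). split; [congruence|].
      unfold share_end. rewrite F3. tauto.
Qed.

Lemma connected_UG u u' : connected UG u u' <-> same_comp u u'.
Proof.
  split.
  - intros [n Hn]. eapply walk_same_comp; eauto.
  - intros H. destruct (same_comp_walk u u' H) as (n & _ & Hn). exists n. auto.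
Qed.

Lemma gadget_dist n u : walk UG n u 3 -> u < 4 -> 3 <= n + u.
Proof.
  intros H. remember 3 as t. induction H as [|n a b c Hab _ IH]; intros Hu; [lia|].
  assert (b < 4 /\ (b = S a \/ a = S b)) by (destruct Hab as [[? ?]|(_ & [? _] & _)]; lia).
  specialize (IH Heqt ltac:(lia)). lia.
Qed.

Lemma UG_diameter_3 : diam_le UG 3 /\ (forall j, diam_le UG j -> 3 <= j).
Proof.
  split.
  - intros u u' H. apply connected_UG in H. now apply same_comp_walk.
  - intros j Hj. destruct (Hj 0 3) as (n & H1 & H2).
    + apply connected_UG. right; left; lia.
    + pose proof (gadget_dist n 0 H2). lia.
Qed.

End UniversalGraph.

(** * Arithmetical complexity of the graph *)

(* [chain_end (S a) L] is [S b] when [L] is a chain from [a] to [b], and 0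
   when [L] is no chain from [a]. *)
Definition chain_step r tr :=
  if r =? 0 then 0
  else if r - 1 =? src tr then dst tr + 1
  else if r - 1 =? dst tr then src tr + 1
  else 0.

Fixpoint chain_end r L := match L with [] => r | tr :: L' => chain_end (chain_step r tr) L' end.

Lemma chain_end_0 L : chain_end 0 L = 0.
Proof. induction L; simpl; auto. Qed.

Lemma chain_end_spec a L b : chain_end (S a) L = S b <-> chain a L b.
Proof.
  revert a; induction L as [|tr L IH]; intros a; simpl; [split; congruence|].
  unfold chain_step. simpl. rewrite Nat.sub_0_r.
  destruct (Nat.eqb_spec a (src tr)) as [<-|Hs].
  - rewrite Nat.add_1_r, IH. split; [tauto|]. intros [[_ H]|[-> H]]; auto.
  - destruct (Nat.eqb_spec a (dst tr)) as [<-|Hd].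
    + rewrite Nat.add_1_r, IH. split; [tauto|]. intros [[? _]|[_ H]]; [congruence|auto].
    + rewrite chain_end_0. split; [discriminate|tauto].
Qed.

Lemma chain_end_snoc r A x : chain_end r (A ++ [x]) = chain_step (chain_end r A) x.
Proof. revert r; induction A; simpl; auto. Qed.

Definition srcT tr := p1T (p2T tr).
Definition dstT tr := p2T (p2T tr).

(* Environment [i; r; L]. *)
Definition chain_step_tm : term :=
  let tr := nthT (Var 0) (Var 2) in
  IfT (FAnd (FTerm (skipT (Var 0) (Var 2))) (FNe (Var 1) (Cst 0)))
    (IfT (FEq (Monus (Var 1) (Cst 1)) (srcT tr)) (Plus (dstT tr) (Cst 1))
       (IfT (FEq (Monus (Var 1) (Cst 1)) (dstT tr)) (Plus (srcT tr) (Cst 1)) (Cst 0)))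
    (Var 1).

Lemma tval_chain_step_tm i r L :
  tval chain_step_tm [i; r; code_list L] =
  if i <? length L then chain_step r (nth i L 0) else r.
Proof.
  unfold chain_step_tm, chain_step.
  destruct (Nat.ltb_spec i (length L)) as [Hi|Hi].
  2:{ apply tval_IfT_false. cbn [sat]. rewrite tval_skipT. cbn [tval nth].
      rewrite skip_code_neq0. lia. }
  destruct (Nat.eq_dec r 0) as [->|Hr].
  { apply tval_IfT_false. cbn [sat tval nth]. intros [_ H]. now apply H. }
  rewrite tval_IfT_true
    by (cbn [sat]; rewrite tval_skipT; cbn [tval nth]; rewrite skip_code_neq0; auto).
  assert (Htr : tval (nthT (Var 0) (Var 2)) [i; r; code_list L] = nth i L 0)
    by (rewrite tval_nthT; cbn [tval nth]; now rewrite nth_code_list).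
  assert (Hsrc : tval (srcT (nthT (Var 0) (Var 2))) [i; r; code_list L] = src (nth i L 0))
    by (unfold srcT; now rewrite tval_p1T, tval_p2T, Htr).
  assert (Hdst : tval (dstT (nthT (Var 0) (Var 2))) [i; r; code_list L] = dst (nth i L 0))
    by (unfold dstT; now rewrite !tval_p2T, Htr).
  apply Nat.eqb_neq in Hr. rewrite Hr.
  destruct (Nat.eqb_spec (r - 1) (src (nth i L 0))) as [E|E].
  { rewrite tval_IfT_true by (cbn [sat tval nth]; rewrite Hsrc; auto).
    cbn [tval]. now rewrite Hdst. }
  rewrite tval_IfT_false by (cbn [sat tval nth]; rewrite Hsrc; auto).
  destruct (Nat.eqb_spec (r - 1) (dst (nth i L 0))) as [E'|E'].
  - rewrite tval_IfT_true by (cbn [sat tval nth]; rewrite Hdst; auto). cbn [tval]. now rewrite Hsrc.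
  - now rewrite tval_IfT_false by (cbn [sat tval nth]; rewrite Hdst; auto).
Qed.

Lemma firstn_S_snoc (l : list nat) n : n < length l -> firstn (S n) l = firstn n l ++ [nth n l 0].
Proof. revert l; induction n; intros [|x l] H; simpl in *; try lia; f_equal; auto with arith. Qed.

(* Environment [a; s]; the list coded by [s] has at most [s] elements. *)
Definition chain_end_tm : term :=
  Rec (Var 1) (Plus (Var 0) (Cst 1)) (App chain_step_tm [Var 0; Var 1; Var 3]).

Lemma tval_chain_end_tm a L : tval chain_end_tm [a; code_list L] = chain_end (S a) L.
Proof.
  unfold chain_end_tm. cbn [tval map nth].
  assert (H : forall N, prim_rec N (a + 1) (fun i r => tval chain_step_tm [i; r; code_list L])
                        = chain_end (S a) (firstn N L)).
  { induction N; cbn [prim_rec]; [now rewrite Nat.add_1_r|].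
    rewrite IHN, tval_chain_step_tm. destruct (Nat.ltb_spec N (length L)).
    - now rewrite firstn_S_snoc, chain_end_snoc.
    - now rewrite !firstn_all2 by lia. }
  rewrite H, firstn_all2; [reflexivity|apply length_le_code_list].
Qed.

Definition FChain (a s b : term) : formula :=
  FEq (App chain_end_tm [a; s]) (Plus b (Cst 1)).

Lemma sat_FChain a s b env :
  sat (FChain a s b) env <-> chain (tval a env) (decode (tval s env)) (tval b env).
Proof.
  unfold FChain. cbn [sat tval map]. rewrite <- (code_list_decode (tval s env)) at 1.
  rewrite tval_chain_end_tm, Nat.add_1_r. apply chain_end_spec.
Qed.

Lemma Forall_decode (P : nat -> Prop) s :
  Forall P (decode s) <-> forall j, j < s -> skip_code j s <> 0 -> P (nth_code j s).
Proof.
  remember (decode s) as L eqn:HL.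
  assert (Hs : s = code_list L) by (subst; symmetry; apply code_list_decode).
  rewrite Hs. clear HL Hs. pose proof (length_le_code_list L) as Hlen. rewrite Forall_forall. split.
  - intros H j _ Hj. rewrite skip_code_neq0 in Hj. rewrite nth_code_list by auto.
    apply H, nth_In, Hj.
  - intros H x Hx. apply In_nth with (d := 0) in Hx as (j & Hj & <-).
    rewrite <- nth_code_list by auto. apply H; [lia|]. now rewrite skip_code_neq0.
Qed.

(* Position [j] in the concatenation of the lists coded by [x], [y], [z]. *)
Definition in_range3 j x y z : Prop :=
  (j < x /\ skip_code j x <> 0) \/ (~ j < x /\ (j - x < y /\ skip_code (j - x) y <> 0)) \/
  (~ j < x /\ (~ j - x < y /\ skip_code (j - x - y) z <> 0)).

Definition elem3 j x y z :=
  if j <? x then nth_code j x else if j - x <? y then nth_code (j - x) y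
  else nth_code (j - x - y) z.

Definition FInRange3 j x y z : formula :=
  FOr (FAnd (FLt j x) (FTerm (skipT j x)))
   (FOr (FAnd (FNot (FLt j x)) (FAnd (FLt (Monus j x) y) (FTerm (skipT (Monus j x) y))))
        (FAnd (FNot (FLt j x))
              (FAnd (FNot (FLt (Monus j x) y)) (FTerm (skipT (Monus (Monus j x) y) z))))).

Definition elem3T j x y z : term :=
  IfT (FLt j x) (nthT j x)
    (IfT (FLt (Monus j x) y) (nthT (Monus j x) y) (nthT (Monus (Monus j x) y) z)).

Lemma sat_FInRange3 j x y z env :
  sat (FInRange3 j x y z) env <-> in_range3 (tval j env) (tval x env) (tval y env) (tval z env).
Proof. unfold FInRange3, in_range3. cbn [sat]. sat_transcribe. Qed.

Lemma tval_elem3T j x y z env :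
  tval (elem3T j x y z) env = elem3 (tval j env) (tval x env) (tval y env) (tval z env).
Proof.
  unfold elem3T, elem3. destruct (Nat.ltb_spec (tval j env) (tval x env)).
  - rewrite tval_IfT_true by (cbn [sat]; auto). apply tval_nthT.
  - rewrite tval_IfT_false by (cbn [sat]; lia).
    destruct (Nat.ltb_spec (tval j env - tval x env) (tval y env)).
    + rewrite tval_IfT_true by (cbn [sat tval]; auto). now rewrite tval_nthT.
    + rewrite tval_IfT_false by (cbn [sat tval]; lia). now rewrite tval_nthT.
Qed.

Lemma not_Forall3_decode (P : nat -> Prop) x y z :
  ~ (Forall P (decode x) /\ Forall P (decode y) /\ Forall P (decode z)) <->
  exists j, j < x + y + z /\ in_range3 j x y z /\ ~ P (elem3 j x y z).
Proof.
  rewrite !Forall_decode. unfold in_range3, elem3. split.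
  - intros H. apply NNPP. intros Hn. apply H.
    split; [|split]; intros j Hj Hs; apply NNPP; intros HP; apply Hn.
    + exists j. destruct (Nat.ltb_spec j x); [|lia].
      split; [lia|]. split; [left; auto|auto].
    + exists (x + j). replace (x + j - x) with j by lia.
      destruct (Nat.ltb_spec (x + j) x); [lia|]. destruct (Nat.ltb_spec j y); [|lia].
      split; [lia|]. split; [right; left; repeat split; auto; lia|auto].
    + exists (x + y + j). replace (x + y + j - x - y) with j by lia.
      replace (x + y + j - x) with (y + j) by lia.
      destruct (Nat.ltb_spec (x + y + j) x); [lia|]. destruct (Nat.ltb_spec (y + j) y); [lia|].
      split; [lia|]. split; [right; right; repeat split; auto; lia|auto].
  - intros (j & Hj & Hr & HP) (Hx & Hy & Hz).
    destruct (Nat.ltb_spec j x); [|destruct (Nat.ltb_spec (j - x) y)];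
      (destruct Hr as [(? & ?)|[(? & ? & ?)|(? & ? & ?)]]; try lia); apply HP.
    + apply Hx; auto.
    + apply Hy; auto.
    + apply Hz; auto. apply NNPP. intros Hge.
      rewrite <- (code_list_decode z), skip_code_neq0 in *.
      pose proof (length_le_code_list (decode z)). rewrite code_list_decode in *. lia.
Qed.

Definition chains_witnessed m e x y z :=
  Forall (witnessed m e) (decode x) /\ Forall (witnessed m e) (decode y) /\
  Forall (witnessed m e) (decode z).

(* [shift k t] reads [t] on [j :: v] as [t] on [v], for [length v = k]. *)
Definition shift k t := App t (map Var (seq 1 k)).

Lemma tval_shift k t j v : length v = k -> tval (shift k t) (j :: v) = tval t v.
Proof.
  intros <-. unfold shift. cbn [tval]. f_equal.
  pose proof (map_tval_vars [j] v []) as E. now rewrite app_nil_r in E.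
Qed.

(* Not being a witnessed chain is a bounded existential over [Sigma^0_m] facts. *)
Lemma alt_not_chains_witnessed m k (A S : formula) (e x y z : term) :
  exists Q, computable_rel (m + k) Q /\ forall v, length v = k ->
    (alt m Q v <->
     sat A v /\ ~ (sat S v /\ chains_witnessed m (tval e v) (tval x v) (tval y v) (tval z v))).
Proof.
  set (tr := elem3T (Var 0) (shift k x) (shift k y) (shift k z)).
  destruct (alt_bounded_ex m k (FAnd A (FNot S))
    (FInRange3 (Var 0) (shift k x) (shift k y) (shift k z)) (univ_matrix (m + 2))
    (IfT (FAnd A S) (Plus (Plus x y) z) (Cst 0)) [p1T tr; srcT tr; dstT tr; shift k e])
    as (Q & HQ & HQv).
  exists Q. split; [exact HQ|]. intros v Hv. rewrite HQv by exact Hv. cbn [sat].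
  set (X := tval x v). set (Y := tval y v). set (Z := tval z v).
  assert (Hin : forall j, sat (FInRange3 (Var 0) (shift k x) (shift k y) (shift k z)) (j :: v)
                          <-> in_range3 j X Y Z)
    by (intros j; now rewrite sat_FInRange3, !tval_shift).
  assert (Hargs : forall j, map (fun a => tval a (j :: v)) [p1T tr; srcT tr; dstT tr; shift k e]
    = [p1 (elem3 j X Y Z); src (elem3 j X Y Z); dst (elem3 j X Y Z); tval e v]).
  { intros j. unfold tr, srcT, dstT. cbn [map].
    now rewrite !tval_p1T, !tval_p2T, tval_elem3T, !tval_shift. }
  setoid_rewrite Hin. setoid_rewrite Hargs.
  set (W := chains_witnessed m (tval e v) X Y Z).
  assert (Hbad : ~ W <-> exists j, j < X + Y + Z /\ in_range3 j X Y Z /\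
    alt m (sat (univ_matrix (m + 2))) [p1 (elem3 j X Y Z); src (elem3 j X Y Z);
                                        dst (elem3 j X Y Z); tval e v]).
  { unfold W, chains_witnessed. rewrite not_Forall3_decode. unfold witnessed, Umat.
    apply iff_ex. intros j. split; intros (? & ? & H); repeat split; auto. apply NNPP, H. }
  destruct (classic (sat A v /\ sat S v)) as [HAS|HAS].
  - rewrite tval_IfT_true by exact HAS. cbn [tval]. fold X Y Z. rewrite <- Hbad. tauto.
  - rewrite tval_IfT_false by exact HAS. cbn [tval].
    split; [intros [?|(j & ? & _)]; [tauto|lia]|tauto].
Qed.

Definition indexT u := p1T (Monus u (Cst 4)).
Definition startT u := p1T (p2T (Monus u (Cst 4))).
Definition endT u := p1T (p2T (p2T (Monus u (Cst 4)))).
Definition chainT u := p2T (p2T (p2T (Monus u (Cst 4)))).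

Lemma tval_vertex_fields u env :
  tval (indexT u) env = index_of (tval u env) /\ tval (startT u) env = start_of (tval u env) /\
  tval (endT u) env = end_of (tval u env) /\ tval (chainT u) env = chain_of (tval u env).
Proof.
  unfold indexT, startT, endT, chainT.
  now rewrite ?tval_p1T, ?tval_p2T, ?tval_p1T, ?tval_p2T, ?tval_p1T.
Qed.

Definition chain_ok u := 4 <= u /\ chain (start_of u) (decode (chain_of u)) (end_of u).

Definition FChainOk u := FAnd (FLt (Cst 3) u) (FChain (startT u) (chainT u) (endT u)).

Lemma sat_FChainOk u env : sat (FChainOk u) env <-> chain_ok (tval u env).
Proof.
  unfold FChainOk, chain_ok. cbn [sat tval]. rewrite sat_FChain.
  destruct (tval_vertex_fields u env) as (_ & -> & -> & ->). split; intros [? ?]; split; auto; lia.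
Qed.

Lemma valid_vertex_chain_ok m u :
  valid_vertex m u <-> chain_ok u /\ Forall (witnessed m (index_of u)) (decode (chain_of u)).
Proof. unfold valid_vertex, chain_ok. tauto. Qed.

(* Environment [u; u']. *)
Definition gadget_edge_fm :=
  FAnd (FAnd (FLt (Var 0) (Cst 4)) (FLt (Var 1) (Cst 4)))
       (FOr (FEq (Var 1) (Plus (Var 0) (Cst 1))) (FEq (Var 0) (Plus (Var 1) (Cst 1)))).

Definition edge_guard_fm :=
  FAnd (FNe (Var 0) (Var 1)) (FAnd (FChainOk (Var 0)) (FAnd (FChainOk (Var 1))
   (FAnd (FEq (indexT (Var 0)) (indexT (Var 1)))
     (FOr (FEq (startT (Var 0)) (startT (Var 1))) (FOr (FEq (startT (Var 0)) (endT (Var 1)))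
       (FOr (FEq (endT (Var 0)) (startT (Var 1))) (FEq (endT (Var 0)) (endT (Var 1))))))))).

Lemma UG_witnessed m u u' : UG m u u' <->
  sat gadget_edge_fm [u; u'] \/
  (sat edge_guard_fm [u; u'] /\ chains_witnessed m (index_of u) (chain_of u) (chain_of u') 0).
Proof.
  unfold UG, gadget_edge_fm, edge_guard_fm, FNe, chains_witnessed. cbn [sat].
  rewrite !sat_FChainOk. cbn [tval nth].
  destruct (tval_vertex_fields (Var 0) [u; u']) as (-> & -> & -> & _).
  destruct (tval_vertex_fields (Var 1) [u; u']) as (-> & -> & -> & _). cbn [tval nth].
  rewrite !valid_vertex_chain_ok. unfold gadget_edge, share_end.
  split; intros [H|H]; [left; lia|right|left; lia|right]; cbn [decode decode_fuel].
  - destruct H as (Hne & [Hc HF] & [Hc' HF'] & Hi & Hs). rewrite <- Hi in HF'.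
    split; [tauto|]. split; [auto|]. split; [auto|constructor].
  - destruct H as ((Hne & Hc & Hc' & Hi & Hs) & HF & HF' & _). rewrite <- Hi. tauto.
Qed.

Lemma UG_Pi m : Pi_rel m (UG m).
Proof.
  destruct (alt_not_chains_witnessed m 2 (FNot gadget_edge_fm) edge_guard_fm
    (indexT (Var 0)) (chainT (Var 0)) (chainT (Var 1)) (Cst 0)) as (Q & HQ & HQv).
  apply (Sigma_ext m 2 (alt m Q)); [|now apply Sigma_alt].
  intros [|u [|u' [|]]] Hv; simpl in Hv; try lia. cbn [rel2].
  rewrite HQv, UG_witnessed by reflexivity. cbn [sat].
  destruct (tval_vertex_fields (Var 0) [u; u']) as (-> & _ & _ & ->).
  destruct (tval_vertex_fields (Var 1) [u; u']) as (_ & _ & _ & ->). cbn [tval nth]. tauto.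
Qed.

(* Environment [c; u; u']. *)
Definition same_base_fm :=
  FOr (FEq (Var 1) (Var 2)) (FAnd (FLt (Var 1) (Cst 4)) (FLt (Var 2) (Cst 4))).

Definition same_guard_fm :=
  FAnd (FChainOk (Var 1)) (FAnd (FChainOk (Var 2))
   (FAnd (FEq (indexT (Var 1)) (indexT (Var 2)))
         (FChain (startT (Var 1)) (Var 0) (startT (Var 2))))).

Lemma sat_same_guard_fm c u u' : sat same_guard_fm [c; u; u'] <->
  chain_ok u /\ chain_ok u' /\ index_of u = index_of u' /\
  chain (start_of u) (decode c) (start_of u').
Proof.
  unfold same_guard_fm. cbn [sat]. rewrite !sat_FChainOk, sat_FChain.
  destruct (tval_vertex_fields (Var 1) [c; u; u']) as (-> & -> & _).
  destruct (tval_vertex_fields (Var 2) [c; u; u']) as (-> & -> & _). reflexivity.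
Qed.

Lemma same_comp_witnessed m u u' : same_comp m u u' <-> exists c,
  sat same_base_fm [c; u; u'] \/
  (sat same_guard_fm [c; u; u'] /\ chains_witnessed m (index_of u) (chain_of u) (chain_of u') c).
Proof.
  unfold same_comp, same_base_fm, chains_witnessed. cbn [sat tval nth].
  setoid_rewrite sat_same_guard_fm. rewrite !valid_vertex_chain_ok. split.
  - intros [H|[H|((Hc & HF) & (Hc' & HF') & Hi & L & HL & HLw)]]; [exists 0; auto..|].
    exists (code_list L). right. rewrite decode_code_list. rewrite <- Hi in HF'. tauto.
  - intros [c [H|((Hc & Hc' & Hi & Hch) & HF & HF' & HFc)]]; [tauto|].
    do 2 right. rewrite <- Hi in *. split; [tauto|]. split; [tauto|]. split; [reflexivity|].
    exists (decode c). auto.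
Qed.

Lemma connected_UG_Sigma m : Sigma_rel (S m) (connected (UG m)).
Proof.
  destruct (alt_not_chains_witnessed m 3 (FNot same_base_fm) same_guard_fm
    (indexT (Var 1)) (chainT (Var 1)) (chainT (Var 2)) (Var 0)) as (Q & HQ & HQv).
  apply (Sigma_ext (S m) 2 (alt (S m) Q)).
  - intros [|u [|u' [|]]] Hv; simpl in Hv; try lia. cbn [rel2 alt].
    rewrite connected_UG, same_comp_witnessed. apply iff_ex. intros c.
    rewrite HQv by reflexivity. cbn [sat].
    destruct (tval_vertex_fields (Var 1) [c; u; u']) as (-> & _ & _ & ->).
    destruct (tval_vertex_fields (Var 2) [c; u; u']) as (_ & _ & _ & ->). cbn [tval nth].
    tauto.
  - apply Sigma_alt. replace (S m + 2) with (m + 3) by lia. exact HQ.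
Qed.

(** * Universality *)

Lemma connected_equivalence (G : nat -> nat -> Prop) :
  (forall a b, G a b -> G b a) -> equivalence_rel (connected G).
Proof.
  intros Hs.
  assert (Happ : forall n1 n2 a b c, walk G n1 a b -> walk G n2 b c -> walk G (n1 + n2) a c).
  { intros n1 n2 a b c H. revert n2 c. induction H; intros; simpl; auto. econstructor; eauto. }
  split; [|split].
  - intros a. exists 0. constructor.
  - intros a b [n H]. exists n. induction H as [|n a b c Hab _ IH]; [constructor|].
    rewrite <- Nat.add_1_r. eapply Happ; [exact IH|]. econstructor; [apply Hs, Hab|constructor].
  - intros a b c [n1 H1] [n2 H2]. exists (n1 + n2). eauto.
Qed.

Definition embedT (e : nat) : term :=
  Plus (Cst 4) (pairT (Cst e) (pairT (Var 0) (pairT (Var 0) (Cst 0)))).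

(* [x] goes to the vertex of the empty chain at [x] for the index [e] of [F]. *)
Lemma UG_universal m F : equivalence_rel F -> Sigma_rel (S m) F ->
  exists f, computable_fun f /\ forall a b, F a b <-> connected (UG m) (f a) (f b).
Proof.
  intros HF HS. apply alt_of_Sigma in HS as (B & (c & Hc) & HB).
  assert (HW : forall x y, F x y <-> alt (S m) (Umat m) [x; y; code c]).
  { intros x y. rewrite (HB [x; y] eq_refl). apply alt_univ. intros v Hv. apply Hc. lia. }
  exists (fun x => vertex (code c) x x 0). split.
  - exists (compile 1 (embedT (code c))). intros x.
    replace (vertex (code c) x x 0) with (tval (embedT (code c)) [x])
      by (unfold embedT, vertex; cbn [tval]; now rewrite !tval_pairT).
    apply (compile_correct _ [x]).
  - intros a b. rewrite connected_UG. unfold same_comp.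
    destruct (vertex_fields (code c) a a 0) as (A1 & A2 & A3 & A4).
    destruct (vertex_fields (code c) b b 0) as (B1 & B2 & B3 & B4).
    assert (Hvalid : forall x, valid_vertex m (vertex (code c) x x 0)).
    { intros x. destruct (vertex_fields (code c) x x 0) as (X1 & X2 & X3 & X4).
      split; [unfold vertex; lia|]. rewrite X1, X2, X3, X4. split; constructor. }
    rewrite A1, A2, B1, B2. split.
    + intros Hab. do 2 right. do 3 (split; [auto|]).
      apply HW in Hab as [w Hw]. exists [pair w (pair a b)]. split.
      * left. unfold src, dst. now rewrite !p2_pair, !p1_pair.
      * constructor; [|constructor]. unfold witnessed, src, dst. now rewrite !p2_pair, !p1_pair.
    + intros [H|[H|(_ & _ & _ & Hrel)]].
      * apply vertex_inj in H as (_ & -> & _). apply (proj1 HF).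
      * unfold vertex in H. lia.
      * apply (chain_rel_closed (witnessed m (code c)) F HF); auto.
        intros tr Htr. apply HW. now exists (p1 tr).
Qed.

Theorem proposition2p6 :
  forall n : nat, 1 <= n ->
    exists E : nat -> nat -> Prop,
      universal_Sigma n E /\ Pi_graphable_diam (n - 1) E 3.
Proof.
  intros [|m] Hn; [lia|]. replace (S m - 1) with m by lia.
  exists (connected (UG m)). split.
  - split; [apply connected_equivalence, UG_sym|].
    split; [apply connected_UG_Sigma|]. intros F HF HS. now apply UG_universal.
  - exists (UG m). split; [apply UG_simple|]. split; [apply UG_Pi|].
    split; [reflexivity|]. apply UG_diameter_3.
Qed.
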